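(* Let $s>2$ be an integer, let $k$ be a positive even integer, and let $a_1,\dots,a_k$ be positive integers with $a_{2i-1}+a_{2i}=s$ for $i=1,\dots,k/2$. If \[ k \ \ge\ 2^{\frac{s}{2}+1}\cdot\left\lceil \left(\frac{s+3}{s-2}\right)^{\frac{s}{2}-1}\left(\frac{5s+6}{5s-6}\right)+1\right\rceil, \] then \[ \Big[0,\tfrac{k}{2}\Big]=\Big\{\sum_{i=1}^{k/2} x_{2i-1}^{a_{2i-1}}x_{2i}^{a_{2i}} \;:\; x_1,\dots,x_k\in C\Big\}. \]
   Context: $C\subseteq[0,1]$ denotes the classical middle-thirds (ternary) Cantor set. *)

From Stdlib Require Import Reals Lra Lia Arith.
Open Scope R_scope.

(* Level-n approximation of the middle-thirds Cantor set:
   C_0 = [0,1],  C_{n+1} = (1/3) C_n  U  (2/3 + (1/3) C_n). *)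
Fixpoint cantor_level (n : nat) (x : R) : Prop :=
  match n with
  | O => 0 <= x <= 1
  | S m => cantor_level m (3 * x) \/ cantor_level m (3 * x - 2)
  end.

Definition cantor_set (x : R) : Prop := forall n : nat, cantor_level n x.

Definition Rceil (x : R) : Z := (- (up (- x) - 1))%Z.

(* Order each pair so that [A >= s/2 >= B]; a value [y] in [[0, k/2]] is then realized as
   [sum_j X_j^(A_j) Q_j^(B_j)] with all [X_j, Q_j] in the Cantor set [C].

   The core is an intermediate value theorem on [C^n]: if [f_i] is increasing with slope in
   [[mm_i, MM_i]] and [2 MM_j <= sum_i mm_i] for every [j], then [sum_i f_i (x_i)] takes on
   [C^n] every value between its values at [0] and [1]. It is proved by nested ternary boxes:
   the [2^n] children of a box contain a chain of [n+1] boxes whose images overlap and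
   together cover the image of the parent. Taking [X_j] in the top piece [1 - w + w C]
   ([w = 3^-J]) of the Cantor set makes [X^A] fit these hypotheses provided no term
   dominates the sum.

   Large [y] use [Q_j = 1] and products [1 * 1] for the integer part. Small [y] are first
   approximated greedily by terms [Q_j^(B_j) (1 - w)^(A_j)] with [Q_j] in the grid
   [{3^-i, 2 3^-(i+1)}] of [C] (whose [B]-th powers have gaps of ratio at most [2^(s/2)]);
   this keeps every term small compared with the total. The bound on [k] supplies enough
   pairs for both phases: the constants are explicit for [s <= 7] and for [s >= 8] come from
   choosing [3^J] between [4 s] and [12 s]. *)

From Stdlib Require Import Reals Lra Lia Arith Classical ClassicalEpsilon.
Open Scope R_scope.

Lemma third_pos : 0 < /3.
Proof. apply Rinv_0_lt_compat; lra. Qed.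

Lemma third_ge0 : 0 <= /3.
Proof. left; apply third_pos. Qed.

Lemma third_lt1 : Rabs (/3) < 1.
Proof. rewrite Rabs_pos_eq by apply third_ge0. lra. Qed.

Lemma pow_le_one x n : 0 <= x <= 1 -> x ^ n <= 1.
Proof. intros. rewrite <- (pow1 n). apply pow_incr. lra. Qed.

Lemma pow_decr x m n : 0 <= x <= 1 -> (m <= n)%nat -> x ^ n <= x ^ m.
Proof.
  intros Hx H. replace n with (m + (n - m))%nat by lia. rewrite pow_add.
  pose proof (pow_le x m ltac:(lra)). pose proof (pow_le_one x (n - m) Hx). nra.
Qed.

Lemma pow_pred_mul x k : (1 <= k)%nat -> x ^ k = x ^ (k - 1) * x.
Proof. intros H. destruct k; [lia|]. simpl. rewrite Nat.sub_0_r. ring. Qed.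

Lemma pow_third_bounds J : (1 <= J)%nat -> 0 < (/3)^J <= /3.
Proof.
  intros HJ. split; [apply pow_lt, third_pos|].
  destruct J as [|J]; [lia|]. simpl.
  pose proof (pow_le_one (/3) J ltac:(lra)). pose proof third_pos. nra.
Qed.

Lemma bernoulli_ineq x n : 0 <= x -> 1 + INR n * x <= (1 + x)^n.
Proof.
  intros Hx. induction n; [simpl; lra|]. rewrite S_INR. simpl pow.
  assert (0 <= INR n * x) by (apply Rmult_le_pos; [apply pos_INR|lra]). nra.
Qed.

Lemma bernoulli_ineq_sub w k : 0 <= w <= 1 -> 1 - INR k * w <= (1 - w)^k.
Proof.
  intros Hw. induction k; [simpl; lra|]. rewrite S_INR. simpl pow.
  assert (0 <= (1-w)^k) by (apply pow_le; lra).
  assert (0 <= INR k * w) by (apply Rmult_le_pos; [apply pos_INR|lra]). nra.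
Qed.

Lemma one_sub_pow_mul_le1 w k : 0 <= w <= 1 -> (1 - w)^k * (1 + INR k * w) <= 1.
Proof.
  intros Hw. assert (B := bernoulli_ineq w k ltac:(lra)).
  assert (E : (1-w)^k * (1+w)^k = (1 - w*w)^k) by (rewrite <- Rpow_mult_distr; f_equal; ring).
  assert ((1 - w*w)^k <= 1) by (apply pow_le_one; nra).
  assert (0 <= (1-w)^k) by (apply pow_le; lra).
  nra.
Qed.

Lemma one_sub_inv_pow_le_half (r : nat) : (1 <= r)%nat -> (1 - 1 / INR r) ^ r <= / 2.
Proof.
  intros Hr. destruct (Nat.eq_dec r 1) as [E|E]; [subst; simpl; lra|].
  assert (Hr2 : 2 <= INR r) by (replace 2 with (INR 2) by (simpl; ring); apply le_INR; lia).
  set (x := 1 / (INR r - 1)).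
  assert (Hx : 0 < x) by (apply Rdiv_lt_0_compat; lra).
  assert (Inv : (1 - 1 / INR r) * (1 + x) = 1) by (unfold x; field; lra).
  assert (B := bernoulli_ineq x r ltac:(lra)).
  assert (Big : INR r * x >= 1)
    by (unfold x; apply Rle_ge, (Rmult_le_reg_r (INR r - 1)); [lra|]; field_simplify; lra).
  assert (P : (1 - 1 / INR r)^r * (1 + x)^r = 1) by (rewrite <- Rpow_mult_distr, Inv; apply pow1).
  assert (0 <= (1 - 1/INR r)^r)
    by (apply pow_le, (Rmult_le_reg_r (INR r)); [lra|]; field_simplify; lra).
  nra.
Qed.

Lemma binomial_cubic_lower x n : 0 <= x ->
  1 + INR n * x + INR n * (INR n - 1) / 2 * x^2
    + INR n * (INR n - 1) * (INR n - 2) / 6 * x^3 <= (1 + x)^n.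
Proof.
  intros Hx. induction n.
  - simpl. lra.
  - rewrite S_INR. simpl pow in *.
    assert (HP : 0 <= INR n * (INR n - 1) * (INR n - 2)).
    { destruct (le_lt_dec 3 n) as [H3|H3].
      - assert (3 <= INR n) by (replace 3 with (INR 3) by (simpl; ring); apply le_INR; auto).
        assert (0 <= INR n * (INR n - 1)) by nra. nra.
      - destruct n as [|[|[|n]]]; simpl; try lra. lia. }
    assert (0 <= x*x*x*x) by (apply Rmult_le_pos; nra).
    assert (0 <= INR n * (INR n - 1) * (INR n - 2) * (x * x * x * x)) by (apply Rmult_le_pos; auto).
    nra.
Qed.

Lemma le_div_of_mul_le a b c : 0 < c -> a * c <= b -> a <= b / c.
Proof. intros Hc H. apply (Rmult_le_reg_r c); auto. replace (b / c * c) with b by (field; lra). auto. Qed.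

Lemma classic_least (P : nat -> Prop) :
  (exists n, P n) -> exists n, P n /\ forall k, (k < n)%nat -> ~ P k.
Proof.
  intros [N HN]. induction N as [N IH] using (well_founded_induction lt_wf).
  destruct (classic (exists k, (k < N)%nat /\ P k)) as [[k [Hk1 Hk2]]|H].
  - apply (IH k Hk1 Hk2).
  - exists N. split; auto. intros k Hk Pk. apply H. exists k. auto.
Qed.

Lemma nat_ceil_exists x : 0 <= x -> exists N : nat, x <= INR N < x + 1.
Proof.
  intros Hx. destruct (INR_unbounded x) as [M HM].
  destruct (classic_least (fun N => x <= INR N)) as [N [H1 H2]]; [exists M; lra|].
  exists N. split; auto. destruct N as [|N].
  - simpl in *. lra.
  - assert (~ x <= INR N) by (apply H2; lia). rewrite S_INR. lra.
Qed.

Lemma half_up_bounds s : (s <= 2 * ((s+1)/2) <= s + 1)%nat.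
Proof.
  pose proof (Nat.div_mod_eq (s+1) 2). pose proof (Nat.mod_upper_bound (s+1) 2 ltac:(lia)). lia.
Qed.

Lemma half_down_bounds s : (2 * (s/2) <= s <= 2 * (s/2) + 1)%nat.
Proof.
  pose proof (Nat.div_mod_eq s 2). pose proof (Nat.mod_upper_bound s 2 ltac:(lia)). lia.
Qed.

(* [rsum n f] has [n] terms, whereas [sum_f_R0 f n] has [n + 1]. *)
Fixpoint rsum (n : nat) (f : nat -> R) : R :=
  match n with O => 0 | S n' => rsum n' f + f n' end.

Lemma rsum_ext n f g : (forall i, (i < n)%nat -> f i = g i) -> rsum n f = rsum n g.
Proof.
  revert f g; induction n; intros f g H; simpl; auto.
  rewrite (IHn f g) by (intros; apply H; lia). rewrite H by lia. auto.
Qed.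

Lemma rsum_le n f g : (forall i, (i < n)%nat -> f i <= g i) -> rsum n f <= rsum n g.
Proof.
  revert f g; induction n; intros f g H; simpl; [lra|].
  pose proof (IHn f g ltac:(intros; apply H; lia)). pose proof (H n ltac:(lia)). lra.
Qed.

Lemma rsum_plus n f g : rsum n (fun i => f i + g i) = rsum n f + rsum n g.
Proof. induction n; simpl; [lra|]. rewrite IHn. lra. Qed.

Lemma rsum_minus n f g : rsum n (fun i => f i - g i) = rsum n f - rsum n g.
Proof. induction n; simpl; [lra|]. rewrite IHn. lra. Qed.

Lemma rsum_scal n c f : rsum n (fun i => c * f i) = c * rsum n f.
Proof. induction n; simpl; [lra|]. rewrite IHn. lra. Qed.

Lemma rsum_const n c : rsum n (fun _ => c) = INR n * c.
Proof. induction n; simpl rsum; [simpl; lra|]. rewrite IHn, S_INR. lra. Qed.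

Lemma rsum_indicator n j c : (j < n)%nat -> rsum n (fun i => if Nat.eqb i j then c else 0) = c.
Proof.
  revert j; induction n; intros j H; [lia|]. simpl.
  destruct (Nat.eqb_spec n j).
  - subst. rewrite (rsum_ext _ _ (fun _ => 0)), rsum_const; [lra|].
    intros i Hi. destruct (Nat.eqb_spec i j); [lia|auto].
  - rewrite IHn by lia. lra.
Qed.

Lemma rsum_nonneg n f : (forall i, (i < n)%nat -> 0 <= f i) -> 0 <= rsum n f.
Proof.
  intros H. replace 0 with (rsum n (fun _ => 0)) at 1 by (rewrite rsum_const; ring).
  apply rsum_le. auto.
Qed.

Lemma rsum_split n1 n2 f : rsum (n1 + n2) f = rsum n1 f + rsum n2 (fun i => f (n1 + i)%nat).
Proof.
  induction n2; simpl.
  - rewrite Nat.add_0_r. lra.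
  - rewrite Nat.add_succ_r. simpl. rewrite IHn2. lra.
Qed.

Lemma sum_f_R0_rsum f n : sum_f_R0 f n = rsum (S n) f.
Proof. induction n; simpl; [lra|]. rewrite IHn. simpl. ring. Qed.

Lemma cantor_level_bounds n x : cantor_level n x -> 0 <= x <= 1.
Proof.
  revert x; induction n as [|n IH]; intros x H; simpl in H; [exact H|].
  destruct H as [H|H]; apply IH in H; lra.
Qed.

Lemma cantor_set_bounds x : cantor_set x -> 0 <= x <= 1.
Proof. intros H. apply (cantor_level_bounds 0), H. Qed.

Lemma cantor_set_div3 v : cantor_set v -> cantor_set (v / 3).
Proof.
  intros H [|n]; simpl.
  - pose proof (cantor_set_bounds v H). lra.
  - left. replace (3 * (v / 3)) with v by field. apply H.
Qed.

Lemma cantor_set_add2_div3 v : cantor_set v -> cantor_set ((v + 2) / 3).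
Proof.
  intros H [|n]; simpl.
  - pose proof (cantor_set_bounds v H). lra.
  - right. replace (3 * ((v + 2) / 3) - 2) with v by field. apply H.
Qed.

Lemma cantor_set_0 : cantor_set 0.
Proof. intros n; induction n; simpl; [lra|]. left. replace (3 * 0) with 0 by ring. exact IHn. Qed.

Lemma cantor_set_1 : cantor_set 1.
Proof. intros n; induction n; simpl; [lra|]. right. replace (3 * 1 - 2) with 1 by ring. exact IHn. Qed.

Lemma cantor_set_pow_third j : cantor_set ((/3)^j).
Proof.
  induction j; simpl; [apply cantor_set_1|].
  replace (/3 * (/3)^j) with ((/3)^j / 3) by (unfold Rdiv; ring). apply cantor_set_div3; auto.
Qed.

Lemma cantor_set_twice_pow_third j : cantor_set (2 * (/3)^(S j)).
Proof.
  induction j.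
  - replace (2 * (/3)^1) with ((0 + 2) / 3) by (simpl; field). apply cantor_set_add2_div3, cantor_set_0.
  - replace (2 * (/3)^(S (S j))) with (2 * (/3)^(S j) / 3) by (simpl; field). apply cantor_set_div3; auto.
Qed.

Lemma cantor_set_top_piece J v : cantor_set v -> cantor_set (1 - (/3)^J + (/3)^J * v).
Proof.
  revert v; induction J as [|J IH]; intros v H.
  - simpl. replace (1 - 1 + 1 * v) with v by ring. exact H.
  - replace (1 - (/3)^(S J) + (/3)^(S J) * v) with ((1 - (/3)^J + (/3)^J * v + 2) / 3)
      by (simpl; field).
    apply cantor_set_add2_div3, IH, H.
Qed.

(* [left_end L z]: [z] is the left end of one of the [2^L] intervals of length [3^-L]
   whose union is [cantor_level L]. *)
Fixpoint left_end (L : nat) (z : R) : Prop :=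
  match L with
  | O => z = 0
  | S L' => exists z', left_end L' z' /\ (z = z' / 3 \/ z = (z' + 2) / 3)
  end.

Lemma left_end_bounds L z : left_end L z -> 0 <= z /\ z + (/3)^L <= 1.
Proof.
  revert z; induction L as [|L IH]; intros z H; simpl in *.
  - subst; lra.
  - destruct H as [z' [H1 [H2|H2]]]; apply IH in H1; subst;
      pose proof (pow_lt_1_compat (/3) L); split; lra.
Qed.

Lemma left_end_level L z t : left_end L z -> z <= t <= z + (/3)^L -> cantor_level L t.
Proof.
  revert z t; induction L as [|L IH]; intros z t H Ht; simpl in *.
  - subst. lra.
  - destruct H as [z' [H1 [H2|H2]]]; subst; [left|right]; apply (IH z'); auto; lra.
Qed.

Lemma left_end_refine L z :
  left_end L z -> left_end (S L) z /\ left_end (S L) (z + 2 * (/3)^(S L)).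
Proof.
  revert z; induction L as [|L IH]; intros z H.
  - simpl in H. subst. split; exists 0; simpl; split; auto; [left|right]; field.
  - destruct H as [z' [H1 H2]]. destruct (IH z' H1) as [Ha Hb]. split.
    + exists z'. split; auto.
    + exists (z' + 2 * (/3)^(S L)). split; auto.
      destruct H2 as [H2|H2]; subst; [left|right]; simpl; field.
Qed.

Definition raise_prefix (u : nat -> R) (h : R) (j : nat) : nat -> R :=
  fun i => if Nat.ltb i j then u i + h else u i.

Lemma raise_prefix_lt u h j i : (i < j)%nat -> raise_prefix u h j i = u i + h.
Proof. intros. unfold raise_prefix. destruct (Nat.ltb_spec i j); [reflexivity|lia]. Qed.

Lemma raise_prefix_ge u h j i : (j <= i)%nat -> raise_prefix u h j i = u i.
Proof. intros. unfold raise_prefix. destruct (Nat.ltb_spec i j); [lia|reflexivity]. Qed.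

Definition in_unit_cube (n : nat) (u : nat -> R) := forall i, (i < n)%nat -> 0 <= u i <= 1.

Lemma chain_pick n (a b : nat -> R) y :
  a 0%nat <= y -> y <= b n -> (forall j, (j < n)%nat -> a (S j) <= b j) ->
  exists j, (j <= n)%nat /\ a j <= y <= b j.
Proof.
  revert a b; induction n as [|n IH]; intros a b Ha Hb Hc.
  - exists 0%nat. split; [lia|lra].
  - destruct (Rle_dec y (b 0%nat)) as [H|H]; [exists 0%nat; split; [lia|lra]|].
    destruct (IH (fun j => a (S j)) (fun j => b (S j))) as [j [Hj1 Hj2]]; auto.
    + specialize (Hc 0%nat ltac:(lia)). lra.
    + intros j Hj. apply Hc. lia.
    + exists (S j). split; [lia|exact Hj2].
Qed.

Section CantorIVT.
Variables (n : nat) (F : (nat -> R) -> R) (K : R).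
Hypothesis K_ge0 : 0 <= K.
Hypothesis F_mono : forall u v, in_unit_cube n u -> in_unit_cube n v ->
  (forall i, (i < n)%nat -> u i <= v i) -> F u <= F v.
Hypothesis F_lipschitz : forall u d, 0 <= d -> in_unit_cube n u -> in_unit_cube n (raise_prefix u d n) ->
  F (raise_prefix u d n) - F u <= K * d.
(* Split a level-[L] box with corner [lo] into its [2^n] children of side [h = 3^-(L+1)].
   The [j]-th child of the chain moves the first [j] coordinates to the right third; the
   hypothesis says that the ranges of [F] on consecutive children of this chain overlap,
   so together they cover the range of [F] on the parent box. *)
Hypothesis F_chain : forall L lo, (forall i, (i < n)%nat -> left_end L (lo i)) ->
  forall j, (j < n)%nat ->
  F (raise_prefix lo (2 * (/3)^(S L)) (S j))
    <= F (raise_prefix (raise_prefix lo (2 * (/3)^(S L)) j) ((/3)^(S L)) n).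
Variable y : R.
Hypothesis y_range : F (fun _ => 0) <= y <= F (raise_prefix (fun _ => 0) 1 n).

Definition Bracket (L : nat) (lo : nat -> R) : Prop :=
  (forall i, (i < n)%nat -> left_end L (lo i)) /\ (forall i, (n <= i)%nat -> lo i = 0) /\
  F lo <= y <= F (raise_prefix lo ((/3)^L) n).

Definition Refines (L : nat) (lo lo' : nat -> R) : Prop :=
  forall i, lo i <= lo' i /\ lo' i + (/3)^(S L) <= lo i + (/3)^L.

Lemma left_end_in_cube L lo : (forall i, (i < n)%nat -> left_end L (lo i)) -> in_unit_cube n lo.
Proof.
  intros H i Hi. destruct (left_end_bounds _ _ (H i Hi)). pose proof (pow_le (/3) L). split; lra.
Qed.

Lemma raised_left_end_in_cube L lo d : (forall i, (i < n)%nat -> left_end L (lo i)) ->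
  0 <= d <= (/3)^L -> in_unit_cube n (raise_prefix lo d n).
Proof.
  intros H Hd i Hi. rewrite raise_prefix_lt by lia. destruct (left_end_bounds _ _ (H i Hi)). split; lra.
Qed.

Lemma F_ext u v : in_unit_cube n u -> in_unit_cube n v ->
  (forall i, (i < n)%nat -> u i = v i) -> F u = F v.
Proof.
  intros Hu Hv H. apply Rle_antisym; apply F_mono; auto; intros i Hi; rewrite H; auto; lra.
Qed.

Lemma bracket_refine L lo : Bracket L lo -> exists lo', Bracket (S L) lo' /\ Refines L lo lo'.
Proof.
  intros [H1 [H2 [H3 H4]]].
  set (h := (/3)^(S L)).
  assert (Hh : (/3)^L = 3 * h) by (unfold h; simpl; field).
  assert (hpos : 0 < h) by (apply pow_lt, third_pos).
  destruct (chain_pick n (fun j => F (raise_prefix lo (2*h) j))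
            (fun j => F (raise_prefix (raise_prefix lo (2*h) j) h n)) y) as [j [Hj Hy]].
  - simpl. unfold raise_prefix at 1. exact H3.
  - enough (E : F (raise_prefix (raise_prefix lo (2 * h) n) h n) = F (raise_prefix lo ((/3)^L) n))
      by (rewrite E; exact H4).
    apply F_ext.
    + intros i Hi. rewrite !raise_prefix_lt by lia.
      destruct (left_end_bounds _ _ (H1 i Hi)). split; lra.
    + apply (raised_left_end_in_cube L); auto. lra.
    + intros i Hi. rewrite !raise_prefix_lt by lia. lra.
  - intros j0 Hj0. apply F_chain; auto.
  - exists (raise_prefix lo (2*h) j). split; [split; [|split]|].
    + intros i Hi. unfold raise_prefix. destruct (Nat.ltb i j); apply left_end_refine, H1; auto.
    + intros i Hi. rewrite raise_prefix_ge by lia. auto.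
    + exact Hy.
    + intros i. unfold raise_prefix. fold h. destruct (Nat.ltb i j); split; lra.
Qed.

Definition refine_step (L : nat) (lo : nat -> R) : nat -> R :=
  proj1_sig (constructive_indefinite_description
    (fun lo' => Bracket L lo -> Bracket (S L) lo' /\ Refines L lo lo')
    (match classic (Bracket L lo) with
     | or_introl H => let (lo', P) := bracket_refine L lo H in ex_intro _ lo' (fun _ => P)
     | or_intror H => ex_intro _ lo (fun H' => False_ind _ (H H'))
     end)).

Lemma refine_step_spec L lo :
  Bracket L lo -> Bracket (S L) (refine_step L lo) /\ Refines L lo (refine_step L lo).
Proof. unfold refine_step. destruct (constructive_indefinite_description _ _). simpl. auto. Qed.

Fixpoint bracket_seq (L : nat) : nat -> R :=
  match L with O => (fun _ => 0) | S L' => refine_step L' (bracket_seq L') end.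

Lemma bracket_seq_spec L : Bracket L (bracket_seq L).
Proof.
  induction L as [|L IH]; [|apply refine_step_spec, IH].
  split; [|split]; [intros; reflexivity | intros; reflexivity | exact y_range].
Qed.

Lemma bracket_seq_nested L d i :
  bracket_seq L i <= bracket_seq (L + d) i /\
  bracket_seq (L + d) i + (/3)^(L + d) <= bracket_seq L i + (/3)^L.
Proof.
  induction d as [|d IH]; [rewrite Nat.add_0_r; lra|].
  replace (L + S d)%nat with (S (L + d)) by lia. simpl bracket_seq.
  destruct (refine_step_spec _ _ (bracket_seq_spec (L + d))) as [_ HR]. destruct (HR i). lra.
Qed.

Definition bracket_values (i : nat) (r : R) : Prop := exists L, r = bracket_seq L i.

Lemma bracket_values_bound i : bound (bracket_values i).
Proof.
  exists (bracket_seq 0 i + 1). intros r [L HL]. subst.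
  destruct (bracket_seq_nested 0 L i) as [_ H]. simpl in *. pose proof (pow_le (/3) L). lra.
Qed.

Lemma bracket_values_inhabited i : exists r, bracket_values i r.
Proof. exists (bracket_seq 0 i), 0%nat. reflexivity. Qed.

Definition bracket_limit (i : nat) : R :=
  proj1_sig (completeness (bracket_values i) (bracket_values_bound i) (bracket_values_inhabited i)).

Lemma bracket_limit_bounds L i : bracket_seq L i <= bracket_limit i <= bracket_seq L i + (/3)^L.
Proof.
  unfold bracket_limit. destruct (completeness _ _ _) as [l [Hub Hlub]]. simpl. split.
  - apply Hub. exists L. reflexivity.
  - apply Hlub. intros r [L' HL']. subst. destruct (Nat.le_ge_cases L' L).
    + replace L with (L' + (L - L'))%nat by lia.
      destruct (bracket_seq_nested L' (L - L') i) as [Ha _].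
      pose proof (pow_le (/3) (L' + (L - L'))). lra.
    + replace L' with (L + (L' - L))%nat by lia.
      destruct (bracket_seq_nested L (L' - L) i) as [_ Hb].
      pose proof (pow_le (/3) (L + (L' - L))). lra.
Qed.

Lemma bracket_limit_cantor i : (i < n)%nat -> cantor_set (bracket_limit i).
Proof.
  intros Hi L. destruct (bracket_seq_spec L) as [H1 _].
  apply (left_end_level L (bracket_seq L i)); auto. apply bracket_limit_bounds.
Qed.

Lemma bracket_limit_close L : Rabs (F bracket_limit - y) <= K * (/3)^L.
Proof.
  destruct (bracket_seq_spec L) as [H1 [_ [H3 H4]]].
  assert (Hpow := pow_le (/3) L third_ge0).
  assert (Hin : in_unit_cube n (bracket_seq L)) by (apply (left_end_in_cube L); auto).
  assert (Hin' : in_unit_cube n (raise_prefix (bracket_seq L) ((/3)^L) n))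
    by (apply (raised_left_end_in_cube L); auto; lra).
  assert (Hlim : in_unit_cube n bracket_limit).
  { intros i Hi. destruct (bracket_limit_bounds L i). destruct (left_end_bounds _ _ (H1 i Hi)). split; lra. }
  assert (A1 : F (bracket_seq L) <= F bracket_limit)
    by (apply F_mono; auto; intros i Hi; apply bracket_limit_bounds).
  assert (A2 : F bracket_limit <= F (raise_prefix (bracket_seq L) ((/3)^L) n)).
  { apply F_mono; auto. intros i Hi. rewrite raise_prefix_lt by auto. apply bracket_limit_bounds. }
  assert (A3 := F_lipschitz (bracket_seq L) ((/3)^L) Hpow Hin Hin').
  unfold Rabs. destruct (Rcase_abs _); lra.
Qed.

Lemma bracket_limit_value : F bracket_limit = y.
Proof.
  destruct (Req_dec (F bracket_limit) y) as [E|E]; auto. exfalso.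
  set (e := Rabs (F bracket_limit - y)).
  assert (Hp : 0 < e) by (apply Rabs_pos_lt; lra).
  destruct (pow_lt_1_zero (/3) third_lt1 (e / (K + 1))) as [N HN]; [apply Rdiv_lt_0_compat; lra|].
  specialize (HN N (le_n _)). rewrite Rabs_pos_eq in HN by (apply pow_le, third_ge0).
  assert (Hb := bracket_limit_close N). fold e in Hb.
  assert (K * (/3)^N <= (K + 1) * (/3)^N) by (pose proof (pow_le (/3) N third_ge0); nra).
  assert ((K + 1) * (/3)^N < e).
  { apply (Rmult_lt_compat_l (K + 1)) in HN; [|lra]. field_simplify in HN; lra. }
  lra.
Qed.

End CantorIVT.

Lemma cantor_ivt (n : nat) (F : (nat -> R) -> R) (K : R) (K_ge0 : 0 <= K)
  (F_mono : forall u v, in_unit_cube n u -> in_unit_cube n v ->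
     (forall i, (i < n)%nat -> u i <= v i) -> F u <= F v)
  (F_lipschitz : forall u d, 0 <= d -> in_unit_cube n u -> in_unit_cube n (raise_prefix u d n) ->
     F (raise_prefix u d n) - F u <= K * d)
  (F_chain : forall L lo, (forall i, (i < n)%nat -> left_end L (lo i)) ->
     forall j, (j < n)%nat ->
     F (raise_prefix lo (2 * (/3)^(S L)) (S j))
       <= F (raise_prefix (raise_prefix lo (2 * (/3)^(S L)) j) ((/3)^(S L)) n))
  (y : R) (y_range : F (fun _ => 0) <= y <= F (raise_prefix (fun _ => 0) 1 n)) :
  exists v : nat -> R, (forall i, (i < n)%nat -> cantor_set (v i)) /\ F v = y.
Proof.
  exists (bracket_limit n F F_mono F_chain y y_range). split.
  - apply bracket_limit_cantor.
  - apply (bracket_limit_value n F K K_ge0); auto.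
Qed.

Section SeparableIVT.
Variables (n : nat) (f : nat -> R -> R) (mm MM : nat -> R).
Hypothesis f_slope : forall i p q, (i < n)%nat -> 0 <= p -> p <= q -> q <= 1 ->
  mm i * (q - p) <= f i q - f i p <= MM i * (q - p).
Hypothesis slope_nonneg : forall i, (i < n)%nat -> 0 <= mm i <= MM i.
Hypothesis slope_small : forall j, (j < n)%nat -> 2 * MM j <= rsum n mm.

Let Fsum (u : nat -> R) := rsum n (fun i => f i (u i)).

Lemma Fsum_mono u v : in_unit_cube n u -> in_unit_cube n v ->
  (forall i, (i < n)%nat -> u i <= v i) -> Fsum u <= Fsum v.
Proof.
  intros Hu Hv H. apply rsum_le. intros i Hi.
  destruct (Hu i Hi), (Hv i Hi). destruct (f_slope i (u i) (v i) Hi) as [Hlow _]; auto.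
  pose proof (slope_nonneg i Hi). pose proof (H i Hi). nra.
Qed.

Lemma Fsum_lipschitz u d : 0 <= d -> in_unit_cube n u -> in_unit_cube n (raise_prefix u d n) ->
  Fsum (raise_prefix u d n) - Fsum u <= rsum n MM * d.
Proof.
  intros Hd Hu Hv. unfold Fsum. rewrite Rmult_comm, <- rsum_scal, <- rsum_minus.
  apply rsum_le. intros i Hi. rewrite raise_prefix_lt by auto.
  specialize (Hv i Hi). rewrite raise_prefix_lt in Hv by auto. specialize (Hu i Hi).
  destruct (f_slope i (u i) (u i + d) Hi) as [_ H2]; lra.
Qed.

(* Going from the top corner of child [j] to the bottom corner of child [j+1] lowers every
   coordinate [i <> j] by [h] and raises coordinate [j] by [h]: the sum changes by at most
   [h (MM j - sum_(i<>j) mm i) <= h (2 MM j - sum mm) <= 0]. *)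
Lemma Fsum_chain L lo : (forall i, (i < n)%nat -> left_end L (lo i)) ->
  forall j, (j < n)%nat ->
  Fsum (raise_prefix lo (2 * (/3)^(S L)) (S j))
    <= Fsum (raise_prefix (raise_prefix lo (2 * (/3)^(S L)) j) ((/3)^(S L)) n).
Proof.
  intros Hlo j Hj. set (h := (/3)^(S L)).
  assert (hpos : 0 < h) by (apply pow_lt, third_pos).
  assert (Hlb : forall i, (i < n)%nat -> 0 <= lo i /\ lo i + 3 * h <= 1).
  { intros i Hi. destruct (left_end_bounds _ _ (Hlo i Hi)). unfold h; simpl. lra. }
  set (d := fun i => if Nat.eqb i j then - (mm j + MM j) * h else 0).
  assert (Hd : forall i, (i < n)%nat ->
     mm i * h + d i <= f i (raise_prefix (raise_prefix lo (2 * h) j) h n i)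
                       - f i (raise_prefix lo (2 * h) (S j) i)).
  { intros i Hi. destruct (Hlb i Hi) as [Hl1 Hl2]. rewrite raise_prefix_lt by auto. unfold d.
    destruct (Nat.eqb_spec i j) as [->|Hij].
    - rewrite (raise_prefix_lt lo (2*h) (S j) j), (raise_prefix_ge lo (2*h) j j) by lia.
      destruct (f_slope j (lo j + h) (lo j + 2*h) Hi) as [_ H2]; lra.
    - destruct (Nat.lt_ge_cases i j).
      + rewrite !raise_prefix_lt by lia.
        destruct (f_slope i (lo i + 2*h) (lo i + 2*h + h) Hi) as [H1 _]; lra.
      + rewrite !raise_prefix_ge by lia.
        destruct (f_slope i (lo i) (lo i + h) Hi) as [H1 _]; lra. }
  assert (Sum := rsum_le n _ _ Hd).
  assert (Sd : rsum n d = - (mm j + MM j) * h) by (apply rsum_indicator; auto).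
  rewrite rsum_plus, rsum_minus, Sd in Sum.
  assert (Smm : rsum n (fun i => mm i * h) = h * rsum n mm)
    by (rewrite <- rsum_scal; apply rsum_ext; intros; lra).
  rewrite Smm in Sum. unfold Fsum. pose proof (slope_small j Hj). pose proof (slope_nonneg j Hj). nra.
Qed.

Lemma cantor_ivt_separable y : rsum n (fun i => f i 0) <= y <= rsum n (fun i => f i 1) ->
  exists v : nat -> R, (forall i, (i < n)%nat -> cantor_set (v i)) /\ rsum n (fun i => f i (v i)) = y.
Proof.
  intros Hy. apply (cantor_ivt n Fsum (rsum n MM)).
  - apply rsum_nonneg. intros i Hi. pose proof (slope_nonneg i Hi). lra.
  - exact Fsum_mono.
  - exact Fsum_lipschitz.
  - exact Fsum_chain.
  - unfold Fsum.
    rewrite (rsum_ext n (fun i => f i (raise_prefix _ 1 n i)) (fun i => f i 1)); [exact Hy|].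
    intros i Hi. rewrite raise_prefix_lt by auto. f_equal. ring.
Qed.

End SeparableIVT.

Lemma pow_increment_bounds A th x X : 0 <= th -> th <= x -> x <= X -> X <= 1 ->
  INR (S A) * th ^ A * (X - x) <= X ^ (S A) - x ^ (S A) <= INR (S A) * (X - x).
Proof.
  intros Hth Hx HX H1. induction A as [|A [L U]]; [simpl; lra|].
  assert (P1 : th ^ (S A) <= x ^ (S A)) by (apply pow_incr; lra).
  assert (P2 : x ^ (S A) <= 1) by (apply pow_le_one; lra).
  assert (P3 : 0 <= th ^ A) by (apply pow_le; lra).
  assert (P4 : 0 <= INR (S A) * th ^ A * (X - x))
    by (apply Rmult_le_pos; [apply Rmult_le_pos; [apply pos_INR|lra]|lra]).
  replace (X ^ S (S A) - x ^ S (S A)) with (X * (X ^ S A - x ^ S A) + x ^ S A * (X - x))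
    by (simpl; ring).
  rewrite S_INR. replace (th ^ S A) with (th * th ^ A) in P1 |- * by (simpl; ring).
  split.
  - assert (th * (INR (S A) * th ^ A * (X - x)) <= X * (X ^ S A - x ^ S A))
      by (apply Rmult_le_compat; lra).
    assert (th * th^A * (X - x) <= x ^ S A * (X - x)) by nra.
    lra.
  - assert (X * (X ^ S A - x ^ S A) <= X ^ S A - x ^ S A) by nra.
    assert (x ^ S A * (X - x) <= X - x) by nra.
    lra.
Qed.

Lemma top_piece_slope_bounds (mu w : R) (A : nat) p q : 0 <= mu -> (1 <= A)%nat -> 0 < w < 1 ->
  0 <= p -> p <= q -> q <= 1 ->
  mu * INR A * w * (1 - w)^(A - 1) * (q - p)
    <= mu * (1 - w + w * q) ^ A - mu * (1 - w + w * p) ^ A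
    <= mu * INR A * w * (q - p).
Proof.
  intros Hm HA Hw Hp Hpq Hq. replace A with (S (A - 1)) by lia.
  destruct (pow_increment_bounds (A - 1) (1 - w) (1 - w + w * p) (1 - w + w * q)) as [L U]; try nra.
  replace (S (A - 1) - 1)%nat with (A - 1)%nat by lia.
  replace (1 - w + w * q - (1 - w + w * p)) with (w * (q - p)) in L, U by ring.
  rewrite <- Rmult_minus_distr_l. split.
  - replace (mu * INR (S (A - 1)) * w * (1 - w) ^ (A - 1) * (q - p))
      with (mu * (INR (S (A - 1)) * (1 - w) ^ (A - 1) * (w * (q - p)))) by ring.
    apply Rmult_le_compat_l; lra.
  - replace (mu * INR (S (A - 1)) * w * (q - p)) with (mu * (INR (S (A - 1)) * (w * (q - p))))
      by ring.
    apply Rmult_le_compat_l; lra.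
Qed.

(* Each [X i] is sought in the top piece [1 - w + w C] of the Cantor set, [w = 3^-J], where
   [x ^ A] has slope between [A w (1-w)^(A-1)] and [A w]. *)
Lemma top_piece_cover (n J : nat) (mu : nat -> R) (A : nat -> nat) (y : R) :
  (1 <= J)%nat ->
  (forall i, (i < n)%nat -> 0 <= mu i /\ (1 <= A i)%nat) ->
  (forall j, (j < n)%nat -> 2 * (mu j * INR (A j) * (/3)^J) <=
        rsum n (fun i => mu i * INR (A i) * (/3)^J * (1 - (/3)^J)^(A i - 1))) ->
  rsum n (fun i => mu i * (1 - (/3)^J)^(A i)) <= y <= rsum n mu ->
  exists X : nat -> R, (forall i, (i < n)%nat -> cantor_set (X i)) /\
    rsum n (fun i => mu i * X i ^ A i) = y.
Proof.
  intros HJ Hmu Hc Hy.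
  set (w := (/3)^J) in *. destruct (pow_third_bounds J HJ) as [w0 w1]. fold w in w0, w1.
  destruct (cantor_ivt_separable n (fun i v => mu i * (1 - w + w * v) ^ A i)
     (fun i => mu i * INR (A i) * w * (1 - w)^(A i - 1)) (fun i => mu i * INR (A i) * w))
    with (y := y) as [v [Hv1 Hv2]].
  - intros i p q Hi. destruct (Hmu i Hi). apply top_piece_slope_bounds; auto; lra.
  - intros i Hi. destruct (Hmu i Hi) as [Hm HA]. pose proof (pos_INR (A i)).
    assert (0 <= (1-w)^(A i - 1) <= 1) by (split; [apply pow_le; lra | apply pow_le_one; lra]).
    assert (0 <= mu i * INR (A i) * w) by (apply Rmult_le_pos; [apply Rmult_le_pos|]; lra).
    split; [apply Rmult_le_pos; lra | nra].
  - exact Hc.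
  - rewrite (rsum_ext n (fun i => mu i * (1 - w + w * 0) ^ A i) (fun i => mu i * (1 - w) ^ A i)),
      (rsum_ext n (fun i => mu i * (1 - w + w * 1) ^ A i) mu).
    + exact Hy.
    + intros. replace (1 - w + w * 1) with 1 by ring. rewrite pow1. ring.
    + intros. f_equal. f_equal. ring.
  - exists (fun i => 1 - w + w * v i). split; [|exact Hv2].
    intros i Hi. apply cantor_set_top_piece, Hv1, Hi.
Qed.

(* The Cantor points [3^-j > 2 3^-(j+1) > 3^-(j+1)] have consecutive ratios at most [3/2],
   so their [B]-th powers leave no gap wider than a factor [2^B]. *)
Lemma cantor_pow_grid B v : (1 <= B)%nat -> 0 < v <= 1 ->
  exists q, cantor_set q /\ v / 2^B <= q ^ B <= v.
Proof.
  intros HB Hv. assert (P2 : 1 <= 2^B) by (apply pow_R1_Rle; lra).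
  destruct (Req_dec v 1) as [->|E].
  { exists 1. split; [apply cantor_set_1|]. rewrite pow1. split; [|lra].
    apply (Rmult_le_reg_r (2^B)); [lra|]. unfold Rdiv. rewrite Rmult_assoc, Rinv_l by lra. lra. }
  assert (Hex : exists j, ((/3)^j)^B <= v).
  { destruct (pow_lt_1_zero (/3) third_lt1 v ltac:(lra)) as [N HN].
    exists N. specialize (HN N (le_n _)). rewrite Rabs_pos_eq in HN by (apply pow_le, third_ge0).
    assert (0 <= (/3)^N <= 1) by (split; [apply pow_le, third_ge0 | apply pow_le_one; lra]).
    pose proof (pow_decr ((/3)^N) 1 B ltac:(lra) HB). simpl in *. lra. }
  destruct (classic_least _ Hex) as [[|j] [Hj1 Hj2]]; [simpl in Hj1; rewrite pow1 in Hj1; lra|].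
  assert (Hp : v < ((/3)^j)^B) by (apply Rnot_le_lt, Hj2; lia).
  set (h := (/3)^(S j)) in *.
  replace ((/3)^j) with (3 * h) in Hp by (unfold h; simpl; field).
  assert (hpos : 0 < h) by (apply pow_lt, third_pos).
  assert (P2' : 0 < 2^B) by lra.
  destruct (Rle_dec ((2 * h)^B) v) as [H2|H2].
  - exists (2 * h). split; [apply cantor_set_twice_pow_third|]. split; auto.
    replace ((3 * h)^B) with ((3/2)^B * (2 * h)^B) in Hp by (rewrite <- Rpow_mult_distr; f_equal; field).
    assert ((3/2)^B <= 2^B) by (apply pow_incr; lra).
    assert (0 < (2 * h)^B) by (apply pow_lt; lra).
    apply Rlt_le, (Rmult_lt_reg_r (2^B)); auto.
    unfold Rdiv. rewrite Rmult_assoc, Rinv_l by lra. nra.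
  - exists h. split; [apply cantor_set_pow_third|]. split; [|exact Hj1].
    rewrite Rpow_mult_distr in H2.
    apply Rlt_le, (Rmult_lt_reg_r (2^B)); auto. unfold Rdiv. rewrite Rmult_assoc, Rinv_l by lra. lra.
Qed.

Lemma cantor_pow_grid_scaled A B w rho kap v : 0 < w < 1 -> (1 <= B)%nat -> 2^B <= rho ->
  0 < kap <= (1-w)^A -> 0 <= v <= rho * kap ->
  exists q, cantor_set q /\ v / rho <= q ^ B * (1-w)^A <= v.
Proof.
  intros Hw HB Hr Hk Hv.
  assert (P2 : 0 < 2^B) by (apply pow_lt; lra).
  assert (Hrp : 0 < rho) by lra.
  set (top := (1-w)^A) in *.
  destruct (Req_dec v 0) as [->|E].
  { exists 0. split; [apply cantor_set_0|]. rewrite pow_i by lia. unfold Rdiv. lra. }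
  destruct (Rle_dec top v) as [H1|H1].
  { exists 1. rewrite pow1. split; [apply cantor_set_1|]. split; [|lra].
    apply (Rmult_le_reg_r rho); auto. unfold Rdiv. rewrite Rmult_assoc, Rinv_l by lra. nra. }
  apply Rnot_le_lt in H1.
  destruct (cantor_pow_grid B (v / top) HB) as [q [Hq1 [Hq2 Hq3]]].
  { split; [apply Rdiv_lt_0_compat; lra|]. apply (Rmult_le_reg_r top); [lra|].
    unfold Rdiv. rewrite Rmult_assoc, Rinv_l by lra. lra. }
  exists q. split; auto. split.
  - apply Rle_trans with (v / 2^B).
    + apply (Rmult_le_reg_r (rho * 2^B)); [nra|].
      unfold Rdiv. replace (v * / rho * (rho * 2 ^ B)) with (v * 2^B) by (field; lra).
      replace (v * / 2^B * (rho * 2 ^ B)) with (v * rho) by (field; lra). nra.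
    + replace (v / 2^B) with (v / top / 2^B * top) by (field; lra).
      apply Rmult_le_compat_r; lra.
  - apply Rle_trans with (v / top * top); [apply Rmult_le_compat_r; lra | right; field; lra].
Qed.

Lemma greedy_remainder_step R U rho t : 0 <= R -> 0 < U -> 1 <= rho ->
  Rmin R U / rho <= t <= Rmin R U ->
  0 <= R - t /\ (U < R -> R - t <= R - U / rho) /\ (R <= U -> R - t <= (1 - 1 / rho) * R).
Proof.
  intros HR HU Hrho Ht. pose proof (Rmin_l R U). pose proof (Rmin_r R U).
  split; [lra|split; intros Hcase].
  - rewrite Rmin_right in Ht by lra. unfold Rdiv in *. lra.
  - rewrite Rmin_left in Ht by lra. unfold Rdiv in *. lra.
Qed.

Section Greedy.
Variables (A B : nat -> nat) (w rho kap U : R).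
Hypothesis w_range : 0 < w < 1.
Hypothesis rho_ge1 : 1 <= rho.
Hypothesis U_range : 0 < U <= rho * kap.
Hypothesis exps_ok : forall j, (1 <= B j)%nat /\ 2 ^ (B j) <= rho /\ 0 < kap <= (1-w)^(A j).

Definition greedy_term (q : nat -> R) (j : nat) := q j ^ B j * (1-w)^(A j).

(* At each step the next term is taken within a factor [rho] below [min (remainder, U)]. *)
Lemma greedy_run n T0 : 0 <= T0 -> exists q : nat -> R, (forall j, cantor_set (q j)) /\
  (forall j, (j < n)%nat -> 0 <= greedy_term q j <= U) /\
  0 <= T0 - rsum n (greedy_term q) /\
  (T0 - rsum n (greedy_term q) <= U \/ T0 - rsum n (greedy_term q) <= T0 - INR n * U / rho) /\
  (T0 <= U -> T0 - rsum n (greedy_term q) <= (1 - 1/rho)^n * T0).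
Proof.
  intros HT0. induction n as [|n IH].
  { exists (fun _ => 0). split; [intros; apply cantor_set_0|]. simpl.
    split; [intros; lia|]. split; [lra|]. split; [right; lra|]. lra. }
  destruct IH as [q [Hq1 [Hq2 [Hq3 [Hq4 Hq5]]]]].
  set (Rn := T0 - rsum n (greedy_term q)) in *.
  destruct (exps_ok n) as [HB1 [HB2 HB3]].
  destruct (cantor_pow_grid_scaled (A n) (B n) w rho kap (Rmin Rn U) w_range HB1 HB2 HB3)
    as [qn [Hqn1 Hqn2]].
  { split; [apply Rmin_glb; lra|]. pose proof (Rmin_r Rn U). lra. }
  set (q' := fun j => if Nat.eqb j n then qn else q j).
  assert (Eold : rsum n (greedy_term q') = rsum n (greedy_term q)).
  { apply rsum_ext. intros i Hi. unfold greedy_term, q'. destruct (Nat.eqb_spec i n); [lia|auto]. }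
  assert (Enew : greedy_term q' n = qn ^ B n * (1-w)^(A n))
    by (unfold greedy_term, q'; rewrite Nat.eqb_refl; auto).
  assert (Rem : T0 - rsum (S n) (greedy_term q') = Rn - greedy_term q' n)
    by (simpl rsum; rewrite Eold; unfold Rn; ring).
  rewrite <- Enew in Hqn2.
  destruct (greedy_remainder_step Rn U rho (greedy_term q' n)) as [R1 [R2 R3]]; try lra.
  assert (Tnn : 0 <= greedy_term q' n).
  { pose proof (Rmin_glb Rn U 0 Hq3 (Rlt_le _ _ (proj1 U_range))).
    assert (0 <= Rmin Rn U / rho) by (apply Rmult_le_pos; [lra|left; apply Rinv_0_lt_compat; lra]).
    lra. }
  exists q'. rewrite Rem. split; [|split; [|split; [|split]]].
  - intros j. unfold q'. destruct (Nat.eqb j n); auto.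
  - intros j Hj. destruct (Nat.eqb_spec j n) as [->|Hjn].
    + pose proof (Rmin_r Rn U). lra.
    + unfold greedy_term, q'. destruct (Nat.eqb_spec j n); [lia|]. apply Hq2. lia.
  - exact R1.
  - rewrite S_INR. destruct (Rle_dec Rn U) as [H|H]; [left; lra|].
    destruct Hq4 as [H4|H4]; [lra|]. right.
    specialize (R2 ltac:(lra)).
    replace (T0 - (INR n + 1) * U / rho) with (T0 - INR n * U / rho - U / rho) by (field; lra). lra.
  - intros HTU. specialize (Hq5 HTU).
    assert (0 <= 1 - 1/rho <= 1).
    { split; [apply (Rmult_le_reg_r rho); [lra|]; field_simplify; lra|].
      assert (0 < 1/rho) by (apply Rdiv_lt_0_compat; lra). lra. }
    assert (0 <= (1 - 1/rho)^n <= 1) by (split; [apply pow_le; lra| apply pow_le_one; lra]).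
    specialize (R3 ltac:(nra)).
    replace ((1 - 1/rho)^(S n) * T0) with ((1 - 1/rho) * ((1 - 1/rho)^n * T0)) by (simpl; ring).
    apply Rle_trans with ((1 - 1 / rho) * Rn); [exact R3|]. apply Rmult_le_compat_l; lra.
Qed.

End Greedy.

(* The first phase brings the remainder below [U]; the second then shrinks it geometrically. *)
Lemma greedy_two_phase (A B : nat -> nat) (w rho kap U T : R) (N1 M : nat) :
  0 < w < 1 -> 1 <= rho -> 0 < U <= rho * kap ->
  (forall j, (1 <= B j)%nat /\ 2 ^ (B j) <= rho /\ 0 < kap <= (1-w)^(A j)) ->
  0 <= T -> T <= U + INR N1 * U / rho ->
  exists q : nat -> R, (forall j, cantor_set (q j)) /\
    (forall j, (j < N1 + M)%nat -> 0 <= greedy_term A B w q j <= U) /\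
    0 <= T - rsum (N1 + M) (greedy_term A B w q) <= (1 - 1/rho)^M * U.
Proof.
  intros Hw Hrho HU Hexps HT HTN.
  destruct (greedy_run A B w rho kap U Hw Hrho HU Hexps N1 T HT) as [q1 [Hq1 [Hq2 [Hq3 [Hq4 _]]]]].
  set (R1 := T - rsum N1 (greedy_term A B w q1)) in *.
  assert (R1U : R1 <= U) by (destruct Hq4; lra).
  set (A2 := fun j => A (N1 + j)%nat). set (B2 := fun j => B (N1 + j)%nat).
  destruct (greedy_run A2 B2 w rho kap U Hw Hrho HU (fun j => Hexps (N1 + j)%nat) M R1 Hq3)
    as [q2 [Hr1 [Hr2 [Hr3 [_ Hr5]]]]].
  specialize (Hr5 R1U).
  set (q := fun j => if Nat.ltb j N1 then q1 j else q2 (j - N1)%nat).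
  assert (Eq : forall j, (j < N1 + M)%nat -> greedy_term A B w q j =
     if Nat.ltb j N1 then greedy_term A B w q1 j else greedy_term A2 B2 w q2 (j - N1)).
  { intros j Hj. unfold q, greedy_term, A2, B2. destruct (Nat.ltb_spec j N1); auto.
    replace (N1 + (j - N1))%nat with j by lia. auto. }
  assert (Esum : rsum (N1 + M) (greedy_term A B w q) =
     rsum N1 (greedy_term A B w q1) + rsum M (greedy_term A2 B2 w q2)).
  { rewrite rsum_split. f_equal.
    - apply rsum_ext. intros i Hi. rewrite Eq by lia. destruct (Nat.ltb_spec i N1); [auto|lia].
    - apply rsum_ext. intros i Hi. rewrite Eq by lia.
      destruct (Nat.ltb_spec (N1 + i) N1); [lia|]. f_equal. lia. }
  assert (0 <= (1 - 1/rho)^M).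
  { apply pow_le. apply (Rmult_le_reg_r rho); [lra|]. field_simplify; lra. }
  exists q. split; [|split].
  - intros j. unfold q. destruct (Nat.ltb j N1); auto.
  - intros j Hj. rewrite Eq by auto. destruct (Nat.ltb_spec j N1); [apply Hq2; auto|apply Hr2; lia].
  - rewrite Esum. split; [unfold R1 in Hr3; lra|].
    apply Rle_trans with ((1 - 1/rho)^M * R1); [unfold R1 in *; lra|].
    apply Rmult_le_compat_l; auto.
Qed.

Definition slope_ratio (s Am : nat) (w : R) := 2 * (INR s - 1) / (INR Am * (1-w)^(s-2)).
Definition top_ratio (Am : nat) (w : R) := / (1-w)^Am.
Definition top_floor (s : nat) (w : R) := (1-w)^(s-1).

Lemma slope_ratio_pos s Am w : (2 <= s)%nat -> (1 <= Am)%nat -> 0 < w < 1 -> 0 < slope_ratio s Am w.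
Proof.
  intros Hs HA Hw. unfold slope_ratio. apply Rdiv_lt_0_compat.
  - assert (2 <= INR s) by (replace 2 with (INR 2) by (simpl; ring); apply le_INR; lia). lra.
  - apply Rmult_lt_0_compat; [apply lt_0_INR; lia|apply pow_lt; lra].
Qed.

Lemma top_ratio_ge1 Am w : 0 < w < 1 -> 1 <= top_ratio Am w.
Proof.
  intros Hw. unfold top_ratio. assert (0 < (1-w)^Am) by (apply pow_lt; lra).
  assert ((1-w)^Am <= 1) by (apply pow_le_one; lra).
  apply (Rmult_le_reg_r ((1-w)^Am)); auto. rewrite Rinv_l by lra. lra.
Qed.

Lemma min_slope_sum_ge n (mu : nat -> R) (A : nat -> nat) (Am : nat) w : 0 < w < 1 -> (1 <= Am)%nat ->
  (forall i, (i < n)%nat -> 0 <= mu i /\ (Am <= A i)%nat) ->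
  INR Am * w / (1 - w) * rsum n (fun i => mu i * (1-w)^(A i))
    <= rsum n (fun i => mu i * INR (A i) * w * (1 - w)^(A i - 1)).
Proof.
  intros Hw HAm Hi. set (p := 1 - w) in *. assert (Hp : 0 < p < 1) by (unfold p; lra).
  rewrite <- rsum_scal. apply rsum_le. intros i Hii. destruct (Hi i Hii) as [Hm HA].
  rewrite (pow_pred_mul p (A i)) by lia.
  assert (INR Am <= INR (A i)) by (apply le_INR; lia).
  assert (0 <= mu i * p^(A i - 1) * w)
    by (apply Rmult_le_pos; [apply Rmult_le_pos; [lra|apply pow_le; lra]|lra]).
  replace (INR Am * w / p * (mu i * (p ^ (A i - 1) * p))) with (INR Am * (mu i * p^(A i - 1) * w))
    by (field; lra).
  replace (mu i * INR (A i) * w * p ^ (A i - 1)) with (INR (A i) * (mu i * p^(A i - 1) * w)) by ring.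
  apply Rmult_le_compat_r; auto.
Qed.

Lemma slope_condition_of_small_terms n (mu : nat -> R) (A : nat -> nat) (s Am : nat) w :
  0 < w < 1 -> (2 <= s)%nat -> (1 <= Am)%nat ->
  (forall i, (i < n)%nat -> 0 <= mu i /\ (Am <= A i <= s - 1)%nat) ->
  forall j, (j < n)%nat ->
  mu j * (1-w)^(A j) <= rsum n (fun i => mu i * (1-w)^(A i)) / slope_ratio s Am w ->
  2 * (mu j * INR (A j) * w) <= rsum n (fun i => mu i * INR (A i) * w * (1 - w)^(A i - 1)).
Proof.
  intros Hw Hs HAm Hi j Hj Hlj.
  assert (Hmin := min_slope_sum_ge n mu A Am w Hw HAm
                    ltac:(intros i Hii; destruct (Hi i Hii); split; lia || lra)).
  set (Lam := rsum n (fun i => mu i * (1-w)^(A i))) in *.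
  set (p := 1 - w) in *. assert (Hp : 0 < p < 1) by (unfold p; lra).
  destruct (Hi j Hj) as [Hmj [HAj1 HAj2]].
  assert (Hs2 : 2 <= INR s) by (replace 2 with (INR 2) by (simpl; ring); apply le_INR; lia).
  assert (HAj : INR (A j) <= INR s - 1).
  { pose proof (le_INR _ _ HAj2) as H. rewrite minus_INR in H by lia. simpl in H. lra. }
  assert (Ps : p^(s-1) = p^(s-2) * p) by (rewrite (pow_pred_mul p (s-1)) by lia; do 2 f_equal; lia).
  assert (P2 : 0 < p^(s-2)) by (apply pow_lt; lra).
  assert (Q : 0 < p^(s-1)) by (apply pow_lt; lra).
  assert (Mj : mu j <= Lam / slope_ratio s Am w / p^(s-1)).
  { apply le_div_of_mul_le; auto. apply Rle_trans with (mu j * p^(A j)); [|exact Hlj].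
    apply Rmult_le_compat_l; [lra|]. apply pow_decr; lra || lia. }
  assert (E : 2 * (INR s - 1) * w * (Lam / slope_ratio s Am w / p ^ (s - 1)) = INR Am * w / p * Lam).
  { unfold slope_ratio. fold p. rewrite Ps. field.
    assert (1 <= INR Am) by (replace 1 with (INR 1) by (simpl; ring); apply le_INR; lia).
    repeat split; lra. }
  assert (HwA : 0 <= INR (A j) * w) by (apply Rmult_le_pos; [apply pos_INR|lra]).
  assert (2 * (mu j * INR (A j) * w) <= 2 * (INR s - 1) * w * mu j).
  { assert (mu j * INR (A j) <= mu j * (INR s - 1)) by (apply Rmult_le_compat_l; lra). nra. }
  assert (2 * (INR s - 1) * w * mu j <= 2 * (INR s - 1) * w * (Lam / slope_ratio s Am w / p ^ (s - 1)))
    by (apply Rmult_le_compat_l; nra).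
  lra.
Qed.

Lemma greedy_cover (A B : nat -> nat) (s Am J N1 t r : nat) (T : R) :
  (1 <= J)%nat -> (3 <= s)%nat -> (1 <= r)%nat -> (1 <= Am)%nat ->
  (forall j, (1 <= B j)%nat /\ (A j + B j)%nat = s /\ (Am <= A j)%nat /\ 2 ^ (B j) <= INR r) ->
  INR r * (slope_ratio s Am ((/3)^J) * top_ratio Am ((/3)^J) - 1) <= INR N1 ->
  (/2)^t <= slope_ratio s Am ((/3)^J) * (top_ratio Am ((/3)^J) - 1) ->
  0 < T <= slope_ratio s Am ((/3)^J) * top_ratio Am ((/3)^J) * top_floor s ((/3)^J) * INR r ->
  exists q : nat -> R, (forall j, cantor_set (q j)) /\
    rsum (N1 + r * t) (fun i => q i ^ B i * (1 - (/3)^J)^(A i)) <= T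
      <= rsum (N1 + r * t) (fun i => q i ^ B i) /\
    (forall j, (j < N1 + r * t)%nat -> 2 * (q j ^ B j * INR (A j) * (/3)^J) <=
        rsum (N1 + r * t) (fun i => q i ^ B i * INR (A i) * (/3)^J * (1 - (/3)^J)^(A i - 1))).
Proof.
  intros HJ Hs Hr HAm Hp H1 H2 HT.
  set (w := (/3)^J) in *. destruct (pow_third_bounds J HJ) as [w0 w1]. fold w in w0, w1.
  assert (Hw : 0 < w < 1) by lra.
  set (c := slope_ratio s Am w) in *. set (g := top_ratio Am w) in *. set (kap := top_floor s w) in *.
  assert (cpos : 0 < c) by (apply slope_ratio_pos; auto; lia).
  assert (g1 : 1 <= g) by (apply top_ratio_ge1; auto).
  assert (rR : 1 <= INR r) by (replace 1 with (INR 1) by (simpl; ring); apply le_INR; lia).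
  set (U := T / (c * g)).
  assert (UT : U * (c * g) = T) by (unfold U; field; nra).
  assert (kpos : 0 < kap) by (apply pow_lt; lra).
  assert (HU : 0 < U <= INR r * kap).
  { split; [unfold U; apply Rdiv_lt_0_compat; nra|].
    apply (Rmult_le_reg_r (c*g)); [nra|]. rewrite UT. nra. }
  assert (Hexps : forall j, (1 <= B j)%nat /\ 2 ^ (B j) <= INR r /\ 0 < kap <= (1-w)^(A j)).
  { intros j. destruct (Hp j) as [Hb1 [Hb2 [Hb3 Hb4]]]. repeat split; auto. apply pow_decr; lia || lra. }
  assert (HTN : T <= U + INR N1 * U / INR r).
  { apply (Rmult_le_reg_r (INR r)); [lra|].
    replace ((U + INR N1 * U / INR r) * INR r) with (U * INR r + INR N1 * U) by (field; lra).
    assert (INR r * (c * g - 1) * U <= INR N1 * U) by (apply Rmult_le_compat_r; lra). nra. }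
  destruct (greedy_two_phase A B w (INR r) kap U T N1 (r * t) Hw rR HU Hexps ltac:(lra) HTN)
    as [q [Hq [Hterm [Hrem0 Hrem]]]].
  set (Lam := rsum (N1 + r * t) (greedy_term A B w q)) in *.
  assert (Hhalf : (1 - 1 / INR r)^(r * t) <= (/2)^t).
  { rewrite pow_mult. apply pow_incr. split; [|apply one_sub_inv_pow_le_half; auto].
    apply pow_le. apply (Rmult_le_reg_r (INR r)); [lra|]. field_simplify; lra. }
  assert (LamTg : T / g <= Lam).
  { assert ((/2)^t * U <= c * (g - 1) * U) by (apply Rmult_le_compat_r; lra).
    assert (c * (g - 1) * U = T - T / g) by (rewrite <- UT; field; lra).
    assert ((1 - 1 / INR r)^(r * t) * U <= (/2)^t * U) by (apply Rmult_le_compat_r; lra). lra. }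
  assert (Hmu : forall i, 0 <= q i ^ B i)
    by (intros; destruct (cantor_set_bounds _ (Hq i)); apply pow_le; lra).
  exists q. split; [exact Hq|split; [split|]].
  - fold (greedy_term A B w q). fold Lam. lra.
  - apply Rle_trans with (g * Lam).
    { apply (Rmult_le_reg_r (/g)); [apply Rinv_0_lt_compat; lra|].
      replace (g * Lam * /g) with Lam by (field; lra). unfold Rdiv in LamTg. lra. }
    unfold Lam. rewrite <- rsum_scal. apply rsum_le. intros i Hi.
    destruct (Hp i) as [_ [_ [HA _]]]. unfold greedy_term.
    assert (Q1 : 0 < (1-w)^(A i)) by (apply pow_lt; lra).
    assert (Q2 : (1-w)^(A i) <= (1-w)^Am) by (apply pow_decr; lra || lia).
    apply Rle_trans with (/ (1-w)^(A i) * (q i ^ B i * (1-w)^(A i))); [|right; field; lra].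
    apply Rmult_le_compat_r; [apply Rmult_le_pos; auto; lra|]. apply Rinv_le_contravar; auto.
  - intros j Hj.
    apply (slope_condition_of_small_terms (N1 + r * t) (fun i => q i ^ B i) A s Am w); auto; try lia.
    + intros i Hi. destruct (Hp i) as [Hb1 [Hb2 [Hb3 _]]]. split; [auto|lia].
    + fold (greedy_term A B w q). fold Lam. fold c. specialize (Hterm j Hj). unfold greedy_term in Hterm.
      apply Rle_trans with U; [lra|]. apply le_div_of_mul_le; auto.
      apply Rle_trans with (T / g); auto. right. unfold U. field. lra.
Qed.

Definition representable (A B : nat -> nat) (m : nat) (y : R) : Prop :=
  exists X Q : nat -> R, (forall j, cantor_set (X j) /\ cantor_set (Q j)) /\
    rsum m (fun j => X j ^ A j * Q j ^ B j) = y.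

Definition covers (A B : nat -> nat) (m : nat) : Prop :=
  forall y, 0 <= y <= INR m -> representable A B m y.

(* Terms [0, n) are active ([Q j = q j], [X j] from [top_piece_cover]), the next [N]
   terms are [1 * 1], and the remaining ones are [0 * 0]. *)
Lemma cover_with_ones (A B : nat -> nat) (m n N J : nat) (q : nat -> R) (y : R) :
  (1 <= J)%nat -> (n + N <= m)%nat -> (forall j, cantor_set (q j)) ->
  (forall j, (1 <= A j)%nat /\ (1 <= B j)%nat) ->
  (forall j, (j < n)%nat -> 2 * (q j ^ B j * INR (A j) * (/3)^J) <=
        rsum n (fun i => q i ^ B i * INR (A i) * (/3)^J * (1 - (/3)^J)^(A i - 1))) ->
  rsum n (fun i => q i ^ B i * (1 - (/3)^J)^(A i)) <= y - INR N <= rsum n (fun i => q i ^ B i) ->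
  representable A B m y.
Proof.
  intros HJ HnN Hq HAB Hc Hy.
  destruct (top_piece_cover n J (fun i => q i ^ B i) A (y - INR N) HJ) as [Xa [HX1 HX2]]; auto.
  { intros i Hi. split; [|apply HAB]. destruct (cantor_set_bounds _ (Hq i)). apply pow_le; lra. }
  exists (fun j => if Nat.ltb j n then Xa j else if Nat.ltb j (n + N) then 1 else 0).
  exists (fun j => if Nat.ltb j n then q j else if Nat.ltb j (n + N) then 1 else 0).
  split.
  - intros j. destruct (Nat.ltb_spec j n); [split; auto|].
    destruct (Nat.ltb j (n + N)); split; (apply cantor_set_1 || apply cantor_set_0).
  - replace m with (n + (N + (m - n - N)))%nat by lia. rewrite !rsum_split.
    rewrite (rsum_ext n _ (fun i => q i ^ B i * Xa i ^ A i)).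
    2:{ intros i Hi. destruct (Nat.ltb_spec i n); [ring|lia]. }
    rewrite (rsum_ext N _ (fun _ => 1)).
    2:{ intros i Hi. destruct (Nat.ltb_spec (n + i) n); [lia|].
        destruct (Nat.ltb_spec (n + i) (n + N)); [|lia]. rewrite !pow1. ring. }
    rewrite (rsum_ext (m - n - N) _ (fun _ => 0)).
    2:{ intros i Hi. destruct (Nat.ltb_spec (n + (N + i)) n); [lia|].
        destruct (Nat.ltb_spec (n + (N + i)) (n + N)); [lia|].
        destruct (HAB (n + (N + i))%nat) as [Ha _]. rewrite pow_i by lia. ring. }
    rewrite !rsum_const, HX2. lra.
Qed.

Lemma representable_0 (A B : nat -> nat) (m : nat) :
  (forall j, (1 <= A j)%nat /\ (1 <= B j)%nat) -> representable A B m 0.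
Proof.
  intros HAB. apply (cover_with_ones A B m 0 0 1 (fun _ => 0)); auto; try lia.
  - intros; apply cantor_set_0.
  - simpl. lra.
Qed.

Lemma representable_small (A B : nat -> nat) (s Am m J N1 t r : nat) (y : R) :
  (1 <= J)%nat -> (3 <= s)%nat -> (1 <= r)%nat -> (1 <= Am)%nat ->
  (forall j, (1 <= B j)%nat /\ (A j + B j)%nat = s /\ (Am <= A j)%nat /\ 2 ^ (B j) <= INR r) ->
  INR r * (slope_ratio s Am ((/3)^J) * top_ratio Am ((/3)^J) - 1) <= INR N1 ->
  (/2)^t <= slope_ratio s Am ((/3)^J) * (top_ratio Am ((/3)^J) - 1) ->
  (N1 + r * t <= m)%nat ->
  0 < y <= slope_ratio s Am ((/3)^J) * top_ratio Am ((/3)^J) * top_floor s ((/3)^J) * INR r ->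
  representable A B m y.
Proof.
  intros HJ Hs Hr HAm Hp H1 H2 Hm Hy.
  destruct (greedy_cover A B s Am J N1 t r y HJ Hs Hr HAm Hp H1 H2 Hy) as [q [Hq1 [Hq2 Hq3]]].
  apply (cover_with_ones A B m (N1 + r * t) 0 J q y HJ); auto.
  - lia.
  - intros j. destruct (Hp j) as [? [? [? _]]]. lia.
  - simpl. lra.
Qed.

Lemma representable_large (A B : nat -> nat) (s Am m J n : nat) (y : R) :
  (1 <= J)%nat -> (1 <= Am)%nat -> (forall j, (1 <= B j)%nat /\ (Am <= A j <= s - 1)%nat) ->
  2 * (INR s - 1) <= INR n * INR Am * (1 - (/3)^J)^(s-2) ->
  1 <= INR n * (1 - (1 - (/3)^J)^Am) ->
  (n <= m)%nat ->
  INR n * (1 - (/3)^J)^Am <= y <= INR m ->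
  representable A B m y.
Proof.
  intros HJ HAm HpA T1 T2 Hnm Hy.
  destruct (pow_third_bounds J HJ) as [w0 w1]. set (w := (/3)^J) in *.
  assert (HAB : forall j, (1 <= A j)%nat /\ (1 <= B j)%nat) by (intros j; destruct (HpA j); lia).
  assert (Sb : rsum n (fun i => 1 ^ B i * (1 - w)^(A i)) <= INR n * (1 - w)^Am).
  { rewrite <- rsum_const. apply rsum_le. intros i Hi. rewrite pow1, Rmult_1_l.
    apply pow_decr; [lra|apply HpA]. }
  assert (Sn : rsum n (fun i => 1 ^ B i) = INR n).
  { rewrite (rsum_ext n _ (fun _ => 1)) by (intros; apply pow1). rewrite rsum_const. ring. }
  assert (Chain : forall j, (j < n)%nat -> 2 * (1 ^ B j * INR (A j) * w) <=
      rsum n (fun i => 1 ^ B i * INR (A i) * w * (1 - w)^(A i - 1))).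
  { intros j Hj. apply Rle_trans with (rsum n (fun _ => INR Am * w * (1 - w)^(s-2))).
    - rewrite rsum_const, pow1.
      assert (INR (A j) <= INR s - 1).
      { pose proof (le_INR _ _ (proj2 (proj2 (HpA j)))) as H.
        rewrite minus_INR in H by (pose proof (HpA j); lia).
        simpl in H. lra. }
      pose proof (pos_INR (A j)). nra.
    - apply rsum_le. intros i Hi. rewrite pow1, Rmult_1_l.
      assert (INR Am <= INR (A i)) by (apply le_INR, HpA).
      assert ((1 - w)^(s-2) <= (1 - w)^(A i - 1)) by (apply pow_decr; [lra| pose proof (HpA i); lia]).
      assert (0 <= (1 - w)^(s-2)) by (apply pow_le; lra).
      pose proof (pos_INR Am). apply Rmult_le_compat; nra. }
  assert (Hones := fun N => cover_with_ones A B m n N J (fun _ => 1) y HJ).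
  destruct (Rle_dec y (INR n)) as [Hn|Hn].
  { apply (Hones 0%nat); auto; try lia; [intros; apply cantor_set_1|]. fold w. simpl INR. rewrite Sn. lra. }
  apply Rnot_le_lt in Hn.
  destruct (nat_ceil_exists (y - INR n)) as [N [HN1 HN2]]; [lra|].
  assert (HNm : (n + N <= m)%nat).
  { assert (HH : INR N < INR (m - n + 1)) by (rewrite plus_INR, minus_INR by auto; simpl; lra).
    apply INR_lt in HH. lia. }
  apply (Hones N); auto; [intros; apply cantor_set_1|]. fold w. rewrite Sn. lra.
Qed.

Lemma cover_of_parameters (A B : nat -> nat) (s Am m J J' N1 t r n : nat) :
  (1 <= J)%nat -> (1 <= J')%nat -> (3 <= s)%nat -> (1 <= r)%nat -> (1 <= Am)%nat ->
  (forall j, (1 <= B j)%nat /\ (A j + B j)%nat = s /\ (Am <= A j)%nat /\ 2 ^ (B j) <= INR r) ->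
  INR r * (slope_ratio s Am ((/3)^J) * top_ratio Am ((/3)^J) - 1) <= INR N1 ->
  (/2)^t <= slope_ratio s Am ((/3)^J) * (top_ratio Am ((/3)^J) - 1) ->
  (N1 + r * t <= m)%nat ->
  2 * (INR s - 1) <= INR n * INR Am * (1 - (/3)^J')^(s-2) ->
  1 <= INR n * (1 - (1 - (/3)^J')^Am) ->
  INR n * (1 - (/3)^J')^Am
    <= slope_ratio s Am ((/3)^J) * top_ratio Am ((/3)^J) * top_floor s ((/3)^J) * INR r ->
  (n <= m)%nat ->
  covers A B m.
Proof.
  intros HJ HJ' Hs Hr HAm Hp H1 H2 H4 T1 T2 T3 Hnm y Hy.
  destruct (Req_dec y 0) as [->|E].
  { apply representable_0. intros j. destruct (Hp j) as [? [? [? _]]]. lia. }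
  destruct (Rle_dec y (slope_ratio s Am ((/3)^J) * top_ratio Am ((/3)^J) * top_floor s ((/3)^J) * INR r)).
  - apply (representable_small A B s Am m J N1 t r); auto; lra.
  - apply (representable_large A B s Am m J' n); auto; [|lra].
    intros j. destruct (Hp j) as [? [? [? _]]]. lia.
Qed.

Definition exponent_pairs (A B : nat -> nat) (s : nat) : Prop :=
  forall j, (1 <= B j)%nat /\ (A j + B j)%nat = s /\ ((s+1)/2 <= A j)%nat /\ 2 ^ (B j) <= INR (2^(s/2)).

Lemma pow3_bracket s : (1 <= s)%nat -> exists J, (1 <= J)%nat /\ 4 * INR s <= 3^J /\ 3^J < 12 * INR s.
Proof.
  intros Hs. assert (Hs1 : 1 <= INR s) by (replace 1 with (INR 1) by (simpl; ring); apply le_INR; auto).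
  destruct (classic_least (fun J => 4 * INR s <= 3^J)) as [J [H1 H2]].
  { destruct (INR_unbounded (4 * INR s)) as [N HN]. exists N.
    pose proof (bernoulli_ineq 2 N ltac:(lra)). replace (1 + 2) with 3 in * by ring. lra. }
  destruct J as [|J]; [simpl in H1; lra|].
  exists (S J). split; [lia|split; auto].
  assert (~ 4 * INR s <= 3^J) by (apply H2; lia). simpl. lra.
Qed.

Section LargeExponent.
Variables (s : nat) (w : R).
Hypothesis s_ge8 : (8 <= s)%nat.
Hypothesis w_lo : 1 < w * (12 * INR s).
Hypothesis w_hi : w * (4 * INR s) <= 1.

Let Am := ((s+1)/2)%nat.
Let p := 1 - w.

Lemma large_s_real : 8 <= INR s.
Proof. replace 8 with (INR 8) by (simpl; ring). apply le_INR; auto. Qed.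

Lemma large_Am_real : INR s <= 2 * INR Am <= INR s + 1.
Proof.
  pose proof (half_up_bounds s) as HA. fold Am in HA.
  replace (2 * INR Am) with (INR (2 * Am)) by (rewrite mult_INR; simpl; ring).
  replace (INR s + 1) with (INR (s + 1)) by (rewrite plus_INR; simpl; ring).
  split; apply le_INR; lia.
Qed.

Lemma large_weight_range : 0 < w < 1 /\ 0 < p < 1.
Proof. pose proof large_s_real. unfold p. assert (0 < w) by nra. split; split; nra. Qed.

Lemma large_pow_products : 5/8 <= p^(s-2) * p^Am /\ 1 - (INR s - 2) * w <= p^(s-2).
Proof.
  pose proof large_s_real. pose proof large_Am_real. pose proof (half_up_bounds s).
  destruct large_weight_range as [Hw _].
  split.
  - rewrite <- pow_add. eapply Rle_trans; [|apply bernoulli_ineq_sub; lra].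
    rewrite plus_INR, minus_INR by lia. simpl (INR 2). nra.
  - eapply Rle_trans; [|apply bernoulli_ineq_sub; lra]. rewrite minus_INR by lia. simpl (INR 2). lra.
Qed.

Lemma large_slope_top_eq :
  slope_ratio s Am w * top_ratio Am w = 2 * (INR s - 1) / (INR Am * (p^(s-2) * p^Am)).
Proof.
  pose proof large_Am_real. pose proof large_s_real. destruct large_weight_range as [_ Hp].
  assert (0 < p^Am) by (apply pow_lt; lra). assert (0 < p^(s-2)) by (apply pow_lt; lra).
  unfold slope_ratio, top_ratio. fold p. field. repeat split; lra.
Qed.

Lemma large_slope_top_bounds : 1 <= slope_ratio s Am w * top_ratio Am w <= 6.4.
Proof.
  pose proof large_Am_real. pose proof large_s_real. destruct large_weight_range as [_ Hp].
  destruct large_pow_products as [P _].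
  assert (P1 : p^(s-2) * p^Am <= 1)
    by (apply Rle_trans with (1 * 1);
        [apply Rmult_le_compat; try apply pow_le_one; try apply pow_le; lra|lra]).
  rewrite large_slope_top_eq. split.
  - apply le_div_of_mul_le; nra.
  - apply (Rmult_le_reg_r (INR Am * (p^(s-2) * p^Am))); [nra|]. field_simplify; nra.
Qed.

Lemma large_slope_tail : /8 <= slope_ratio s Am w * (top_ratio Am w - 1).
Proof.
  pose proof large_Am_real. pose proof large_s_real. destruct large_weight_range as [Hw Hp].
  assert (PA : 0 < p^Am) by (apply pow_lt; lra).
  assert (P2 : 0 < p^(s-2)) by (apply pow_lt; lra).
  assert (B4 : p^Am * (1 + INR Am * w) <= 1) by (apply one_sub_pow_mul_le1; lra).
  unfold slope_ratio, top_ratio. fold p.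
  assert (G1 : INR Am * w <= / p^Am - 1) by (apply (Rmult_le_reg_r (p^Am)); auto; field_simplify; nra).
  assert (C1 : 2 * (INR s - 1) / INR Am <= 2 * (INR s - 1) / (INR Am * p^(s-2))).
  { apply Rmult_le_compat_l; [lra|]. apply Rinv_le_contravar; [nra|].
    assert (p^(s-2) <= 1) by (apply pow_le_one; lra). nra. }
  assert (C2 : 0 <= 2 * (INR s - 1) / INR Am)
    by (apply Rmult_le_pos; [lra|left; apply Rinv_0_lt_compat; lra]).
  assert (C3 : 2 * (INR s - 1) / INR Am * (INR Am * w) = 2 * (INR s - 1) * w) by (field; lra).
  assert (2 * (INR s - 1) / INR Am * (INR Am * w)
            <= 2 * (INR s - 1) / (INR Am * p ^ (s - 2)) * (/ p ^ Am - 1)) by (apply Rmult_le_compat; nra).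
  assert (2 * (INR s - 1) * w >= / 8) by (apply Rle_ge, (Rmult_le_reg_r (12 * INR s)); nra).
  lra.
Qed.

Lemma large_active_slope : 2 * (INR s - 1) <= 25 * INR Am * p^(s-2).
Proof.
  pose proof large_Am_real. pose proof large_s_real. destruct large_pow_products as [_ P].
  destruct large_weight_range as [Hw _].
  assert (3/4 <= 1 - (INR s - 2) * w) by nra.
  nra.
Qed.

Lemma large_active_gap : 1 <= 25 * (1 - p^Am).
Proof.
  pose proof large_Am_real. pose proof large_s_real. destruct large_weight_range as [Hw Hp].
  assert (B4 : p^Am * (1 + INR Am * w) <= 1) by (apply one_sub_pow_mul_le1; lra).
  assert (INR Am * w >= 1/24) by nra.
  assert (p^Am <= 24/25) by (apply (Rmult_le_reg_r (1 + INR Am * w)); nra).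
  lra.
Qed.

Lemma large_active_top :
  25 * p^Am <= slope_ratio s Am w * top_ratio Am w * top_floor s w * 2^(s/2).
Proof.
  pose proof large_Am_real. pose proof large_s_real. pose proof (half_down_bounds s).
  destruct large_weight_range as [Hw Hp].
  assert (rho16 : 16 <= 2^(s/2)) by (replace 16 with (2^4) by (simpl; ring); apply Rle_pow; [lra|lia]).
  assert (PA : 0 < p^Am) by (apply pow_lt; lra).
  assert (0 < p^(s-2)) by (apply pow_lt; lra).
  assert (E : slope_ratio s Am w * top_ratio Am w * top_floor s w = 2 * (INR s - 1) / INR Am * (p / p^Am)).
  { unfold slope_ratio, top_ratio, top_floor. fold p.
    rewrite (pow_pred_mul p (s - 1)) by lia. replace (s - 1 - 1)%nat with (s - 2)%nat by lia.
    field. repeat split; lra. }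
  rewrite E.
  assert (HAm : (1 <= Am)%nat) by (unfold Am; pose proof (half_up_bounds s); lia).
  assert (1 <= p / p^Am).
  { apply le_div_of_mul_le; auto. rewrite Rmult_1_l. rewrite <- (pow_1 p) at 2.
    apply pow_decr; lra || lia. }
  assert (2 <= 2 * (INR s - 1) / INR Am) by (apply le_div_of_mul_le; lra).
  assert (p^Am <= 1) by (apply pow_le_one; lra).
  assert (2 <= 2 * (INR s - 1) / INR Am * (p / p^Am)) by nra.
  nra.
Qed.

End LargeExponent.

Lemma cover_large_s (A B : nat -> nat) (s m : nat) : (8 <= s)%nat -> exponent_pairs A B s ->
  8.4 * 2^(s/2) + 1 <= INR m -> covers A B m.
Proof.
  intros Hs Hp Hm.
  pose proof (half_up_bounds s). pose proof (half_down_bounds s).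
  assert (sR := large_s_real s Hs).
  destruct (pow3_bracket s ltac:(lia)) as [J [HJ1 [HJ2 HJ3]]].
  set (w := (/3)^J).
  assert (W0 : 0 < 3^J) by (apply pow_lt; lra).
  assert (wE : w * 3^J = 1)
    by (unfold w; rewrite <- Rpow_mult_distr; replace (/3 * 3) with 1 by field; apply pow1).
  assert (w_lo : 1 < w * (12 * INR s)) by nra.
  assert (w_hi : w * (4 * INR s) <= 1) by nra.
  assert (rho : INR (2^(s/2)) = 2^(s/2))
    by (rewrite pow_INR; replace (INR 2) with 2 by (simpl; ring); reflexivity).
  assert (rho16 : 16 <= 2^(s/2)) by (replace 16 with (2^4) by (simpl; ring); apply Rle_pow; [lra|lia]).
  destruct (large_slope_top_bounds s w Hs w_lo w_hi) as [_ cg].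
  destruct (nat_ceil_exists (5.4 * 2^(s/2))) as [N1 [HN1 HN2]]; [lra|].
  assert (R25 : INR 25 = 25) by (simpl; ring).
  apply (cover_of_parameters A B s ((s+1)/2) m J J N1 3 (2^(s/2)) 25); fold w; auto; try lia.
  - pose proof (Nat.pow_nonzero 2 (s/2)). lia.
  - rewrite rho. apply Rle_trans with (2^(s/2) * 5.4); [apply Rmult_le_compat_l|]; lra.
  - replace ((/2)^3) with (/8) by (simpl; field). apply large_slope_tail; auto.
  - apply INR_le. rewrite plus_INR, mult_INR, rho. simpl (INR 3). lra.
  - rewrite R25. apply large_active_slope; auto.
  - rewrite R25. apply large_active_gap; auto.
  - rewrite R25, rho. apply large_active_top; auto.
  - apply INR_le. rewrite R25. lra.
Qed.

Lemma Rceil_ge z : z <= IZR (Rceil z).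
Proof. unfold Rceil. rewrite opp_IZR, minus_IZR. destruct (archimed (- z)) as [_ H]. simpl. lra. Qed.

Definition base_ratio (s : nat) := (INR s + 3) / (INR s - 2).
Definition tail_ratio (s : nat) := (5 * INR s + 6) / (5 * INR s - 6).

Lemma frac_pow2_ge1 s : 1 <= Rpower 2 (INR s / 2 - INR (s/2)).
Proof.
  pose proof (half_down_bounds s).
  assert (2 * INR (s/2) <= INR s)
    by (replace (2 * INR (s/2)) with (INR (2 * (s/2))) by (rewrite mult_INR; simpl; ring); apply le_INR; lia).
  rewrite <- (Rpower_O 2) at 1 by lra. apply Rle_Rpower; lra.
Qed.

(* [Rpower 2 (s/2 + 1) = 2 * 2^(s/2) * f] with [f = 2^(frac (s/2))], and [Rpower] at the
   integer exponent [s/2 - 1] is bounded below by the truncated [pow]. *)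
Lemma hbound_weaken (s k : nat) : (2 < s)%nat ->
  INR k >= Rpower 2 (INR s / 2 + 1) *
      IZR (Rceil (Rpower ((INR s + 3) / (INR s - 2)) (INR s / 2 - 1)
                  * ((5 * INR s + 6) / (5 * INR s - 6)) + 1)) ->
  forall f, 0 <= f -> f <= Rpower 2 (INR s / 2 - INR (s/2)) ->
  2 * (2^(s/2) * f * (base_ratio s ^ (s/2 - 1) * tail_ratio s + 1)) <= INR k.
Proof.
  intros hs hb f Hf0 Hf.
  assert (sR : 3 <= INR s) by (replace 3 with (INR 3) by (simpl; ring); apply le_INR; lia).
  pose proof (half_down_bounds s) as HB.
  assert (hR : 2 * INR (s/2) <= INR s).
  { replace (2 * INR (s/2)) with (INR (2 * (s/2))) by (rewrite mult_INR; simpl; ring). apply le_INR; lia. }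
  assert (h1 : (1 <= s/2)%nat) by lia.
  assert (Ha : 1 <= base_ratio s) by (apply le_div_of_mul_le; unfold base_ratio; lra).
  assert (Hrr : 1 <= tail_ratio s) by (apply le_div_of_mul_le; unfold tail_ratio; lra).
  assert (P2 : 0 < 2^(s/2)) by (apply pow_lt; lra).
  assert (Pow2 : 2 * (2^(s/2) * f) <= Rpower 2 (INR s / 2 + 1)).
  { rewrite Rpower_plus, Rpower_1 by lra.
    replace (INR s / 2) with (INR (s/2) + (INR s / 2 - INR (s/2))) at 1 by ring.
    rewrite Rpower_plus, Rpower_pow by lra. nra. }
  assert (PowA : base_ratio s ^ (s/2 - 1) <= Rpower (base_ratio s) (INR s / 2 - 1)).
  { rewrite <- Rpower_pow by lra. apply Rle_Rpower; auto.
    rewrite minus_INR by auto. change (INR 1) with 1. lra. }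
  fold (base_ratio s) (tail_ratio s) in hb.
  assert (Ceil := Rceil_ge (Rpower (base_ratio s) (INR s / 2 - 1) * tail_ratio s + 1)).
  assert (0 <= base_ratio s ^ (s/2 - 1)) by (apply pow_le; lra).
  assert (base_ratio s ^ (s/2 - 1) * tail_ratio s <= Rpower (base_ratio s) (INR s / 2 - 1) * tail_ratio s)
    by (apply Rmult_le_compat_r; lra).
  assert (0 <= 2 * (2^(s/2) * f)) by nra.
  apply Rle_trans with (Rpower 2 (INR s / 2 + 1) *
                        IZR (Rceil (Rpower (base_ratio s) (INR s / 2 - 1) * tail_ratio s + 1))); [|lra].
  rewrite <- Rmult_assoc. apply Rmult_le_compat; nra.
Qed.

Lemma cubic_estimate_even N : 3 <= N ->
  8.4625 <= (1 + N * (5/(2*N)) + N * (N - 1) / 2 * (5/(2*N))^2 + N * (N - 1) * (N - 2) / 6 * (5/(2*N))^3)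
            * ((10 * N + 16) / (10 * N + 4)) + 1.
Proof.
  intros HN.
  replace (1 + N * (5/(2*N)) + N * (N - 1) / 2 * (5/(2*N))^2 + N * (N - 1) * (N - 2) / 6 * (5/(2*N))^3)
    with ((443 * N^2 - 525 * N + 250) / (48 * N^2)) by (field; lra).
  replace ((443 * N ^ 2 - 525 * N + 250) / (48 * N ^ 2) * ((10 * N + 16) / (10 * N + 4)) + 1)
    with (((443 * N ^ 2 - 525 * N + 250) * (10 * N + 16) + 48 * N^2 * (10 * N + 4))
          / (48 * N^2 * (10 * N + 4))) by (field; lra).
  apply le_div_of_mul_le; [nra|].
  assert (0 <= (N - 3) * N * N) by (apply Rmult_le_pos; [apply Rmult_le_pos|]; lra).
  nra.
Qed.

Lemma cubic_estimate_odd N : 3 <= N ->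
  5.002 <= (1 + N * (5/(2*N+1)) + N * (N - 1) / 2 * (5/(2*N+1))^2
              + N * (N - 1) * (N - 2) / 6 * (5/(2*N+1))^3) * ((10 * N + 21) / (10 * N + 9)).
Proof.
  intros HN.
  replace (1 + N * (5/(2*N+1)) + N * (N - 1) / 2 * (5/(2*N+1))^2 + N * (N - 1) * (N - 2) / 6 * (5/(2*N+1))^3)
    with ((443 * N^3 - 258 * N^2 + 241 * N + 6) / (6 * (2*N+1)^3)) by (field; lra).
  replace ((443 * N^3 - 258 * N^2 + 241 * N + 6) / (6 * (2*N+1)^3) * ((10 * N + 21) / (10 * N + 9)))
    with (((443 * N^3 - 258 * N^2 + 241 * N + 6) * (10 * N + 21)) / (6 * (2*N+1)^3 * (10 * N + 9)))
    by (field; lra).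
  assert (0 < (2*N+1)^3) by (apply pow_lt; lra).
  apply le_div_of_mul_le; [nra|].
  assert (0 <= (N - 3) * N * N * N) by (repeat apply Rmult_le_pos; lra).
  assert (0 <= (N - 3) * N * N) by (repeat apply Rmult_le_pos; lra).
  simpl. nra.
Qed.

(* With [n = s/2 - 1], the base ratio is [1 + 5/(2n)] for even [s] and [1 + 5/(2n+1)] for odd
   [s]; the first four binomial terms of its [n]-th power suffice. *)
Lemma threshold_factor_lower s : (8 <= s)%nat ->
  (s = (2 * (s/2))%nat -> 8.4625 <= base_ratio s ^ (s/2 - 1) * tail_ratio s + 1) /\
  (s = (2 * (s/2) + 1)%nat -> 5.002 <= base_ratio s ^ (s/2 - 1) * tail_ratio s).
Proof.
  intros Hs. pose proof (half_down_bounds s).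
  set (n := (s/2 - 1)%nat).
  assert (NR : 3 <= INR n) by (replace 3 with (INR 3) by (simpl; ring); apply le_INR; unfold n; lia).
  assert (nE : INR (s/2) = INR n + 1) by (unfold n; rewrite <- S_INR; f_equal; lia).
  split; intros Hpar.
  - assert (sE : INR s = 2 * INR n + 2) by (rewrite Hpar at 1; rewrite mult_INR, nE; simpl; ring).
    replace (base_ratio s) with (1 + 5 / (2 * INR n)) by (unfold base_ratio; rewrite sE; field; lra).
    replace (tail_ratio s) with ((10 * INR n + 16) / (10 * INR n + 4))
      by (unfold tail_ratio; rewrite sE; field; lra).
    assert (Bn := binomial_cubic_lower (5 / (2 * INR n)) n
                    ltac:(apply Rmult_le_pos; [lra|left; apply Rinv_0_lt_compat; lra])).
    assert (0 < (10 * INR n + 16) / (10 * INR n + 4)) by (apply Rdiv_lt_0_compat; lra).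
    eapply Rle_trans; [apply (cubic_estimate_even (INR n) NR)|].
    apply Rplus_le_compat_r, Rmult_le_compat_r; lra.
  - assert (sE : INR s = 2 * INR n + 3) by (rewrite Hpar at 1; rewrite plus_INR, mult_INR, nE; simpl; ring).
    replace (base_ratio s) with (1 + 5 / (2 * INR n + 1)) by (unfold base_ratio; rewrite sE; field; lra).
    replace (tail_ratio s) with ((10 * INR n + 21) / (10 * INR n + 9))
      by (unfold tail_ratio; rewrite sE; field; lra).
    assert (Bn := binomial_cubic_lower (5 / (2 * INR n + 1)) n
                    ltac:(apply Rmult_le_pos; [lra|left; apply Rinv_0_lt_compat; lra])).
    assert (0 < (10 * INR n + 21) / (10 * INR n + 9)) by (apply Rdiv_lt_0_compat; lra).
    eapply Rle_trans; [apply (cubic_estimate_odd (INR n) NR)|].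
    apply Rmult_le_compat_r; lra.
Qed.

Lemma hbound_large_s (s k : nat) : (8 <= s)%nat ->
  INR k >= Rpower 2 (INR s / 2 + 1) *
      IZR (Rceil (Rpower ((INR s + 3) / (INR s - 2)) (INR s / 2 - 1)
                  * ((5 * INR s + 6) / (5 * INR s - 6)) + 1)) ->
  2 * (8.4 * 2^(s/2) + 1) <= INR k.
Proof.
  intros Hs hb. pose proof (half_down_bounds s).
  assert (rho16 : 16 <= 2^(s/2)) by (replace 16 with (2^4) by (simpl; ring); apply Rle_pow; [lra|lia]).
  destruct (threshold_factor_lower s Hs) as [Heven Hodd].
  destruct (Nat.eq_dec s (2 * (s/2))) as [Ev|Od].
  - assert (D := hbound_weaken s k ltac:(lia) hb 1 ltac:(lra) (frac_pow2_ge1 s)).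
    specialize (Heven Ev). nra.
  - assert (Od' : s = (2 * (s/2) + 1)%nat) by lia. specialize (Hodd Od').
    assert (Hf : 1.41 <= Rpower 2 (INR s / 2 - INR (s/2))).
    { replace (INR s / 2 - INR (s/2)) with (/2)
        by (rewrite Od' at 1; rewrite plus_INR, mult_INR; simpl; field).
      rewrite Rpower_sqrt by lra. rewrite <- (sqrt_square 1.41) by lra. apply sqrt_le_1_alt. lra. }
    assert (D := hbound_weaken s k ltac:(lia) hb 1.41 ltac:(lra) Hf). nra.
Qed.

Ltac solve_numeric := unfold slope_ratio, top_ratio, top_floor, base_ratio, tail_ratio in *; simpl in *; lra.

Lemma cover_small_s (A B : nat -> nat) (s m : nat) : (3 <= s <= 7)%nat -> exponent_pairs A B s ->
  2^(s/2) * (base_ratio s ^ (s/2 - 1) * tail_ratio s + 1) <= INR m -> covers A B m.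
Proof.
  intros Hs Hp Hm.
  assert (Hlt : forall a : nat, INR a < INR m -> (a <= m)%nat) by (intros a Ha; apply INR_lt in Ha; lia).
  assert (E : s = 3%nat \/ s = 4%nat \/ s = 5%nat \/ s = 6%nat \/ s = 7%nat) by lia.
  destruct E as [-> | [-> | [-> | [-> | ->]]]].
  - apply (cover_of_parameters A B 3 2 m 2 1 4 1 2 3); auto; try lia; try solve_numeric;
      apply Hlt; solve_numeric.
  - apply (cover_of_parameters A B 4 2 m 2 1 16 0 4 7); auto; try lia; try solve_numeric;
      apply Hlt; solve_numeric.
  - apply (cover_of_parameters A B 5 3 m 2 1 18 0 4 9); auto; try lia; try solve_numeric;
      apply Hlt; solve_numeric.
  - apply (cover_of_parameters A B 6 3 m 3 1 27 2 8 17); auto; try lia; try solve_numeric;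
      apply Hlt; solve_numeric.
  - apply (cover_of_parameters A B 7 4 m 3 1 26 1 8 23); auto; try lia; try solve_numeric;
      apply Hlt; solve_numeric.
Qed.

Lemma cover_of_hbound (A B : nat -> nat) (s m : nat) : (2 < s)%nat -> exponent_pairs A B s ->
  INR (2 * m) >= Rpower 2 (INR s / 2 + 1) *
      IZR (Rceil (Rpower ((INR s + 3) / (INR s - 2)) (INR s / 2 - 1)
                  * ((5 * INR s + 6) / (5 * INR s - 6)) + 1)) ->
  covers A B m.
Proof.
  intros hs Hp hb. rewrite mult_INR in hb. change (INR 2) with 2 in hb.
  destruct (le_lt_dec 8 s) as [H8|H8].
  - apply (cover_large_s A B s m); auto.
    assert (D := hbound_large_s s (2 * m) H8). rewrite mult_INR in D. change (INR 2) with 2 in D.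
    specialize (D hb). lra.
  - apply (cover_small_s A B s m); auto; [lia|].
    assert (D := hbound_weaken s (2 * m) hs ltac:(rewrite mult_INR; exact hb) 1 ltac:(lra)
                   (frac_pow2_ge1 s)).
    rewrite mult_INR in D. change (INR 2) with 2 in D. lra.
Qed.

(* Each pair is ordered so that the larger exponent comes first; indices [>= m] get the
   dummy exponents [(s - 1, 1)]. *)
Definition big_exp (a : nat -> nat) (m s j : nat) : nat :=
  if Nat.ltb j m then Nat.max (a (2*j+1)%nat) (a (2*j+2)%nat) else (s - 1)%nat.
Definition small_exp (a : nat -> nat) (m s j : nat) : nat :=
  if Nat.ltb j m then Nat.min (a (2*j+1)%nat) (a (2*j+2)%nat) else 1%nat.

Lemma exponent_pairs_of_sums (s m : nat) (a : nat -> nat) : (3 <= s)%nat ->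
  (forall i : nat, (1 <= i <= 2 * m)%nat -> (0 < a i)%nat) ->
  (forall i : nat, (1 <= i <= m)%nat -> (a (2 * i - 1) + a (2 * i))%nat = s) ->
  exponent_pairs (big_exp a m s) (small_exp a m s) s.
Proof.
  intros hs hpos hsum j. pose proof (half_up_bounds s). pose proof (half_down_bounds s).
  assert (HB : forall b, (b <= s/2)%nat -> 2 ^ b <= INR (2^(s/2))).
  { intros b Hb. rewrite pow_INR. replace (INR 2) with 2 by (simpl; ring). apply Rle_pow; [lra|auto]. }
  unfold big_exp, small_exp. destruct (Nat.ltb_spec j m) as [Hj|Hj].
  - assert (H1 := hpos (2*j+1)%nat ltac:(lia)). assert (H2 := hpos (2*j+2)%nat ltac:(lia)).
    specialize (hsum (S j) ltac:(lia)).
    replace (2 * S j - 1)%nat with (2*j+1)%nat in hsum by lia.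
    replace (2 * S j)%nat with (2*j+2)%nat in hsum by lia.
    split; [lia|split; [lia|split; [lia|]]]. apply HB. lia.
  - split; [lia|split; [lia|split; [lia|]]]. apply HB. lia.
Qed.

Definition interleave (a : nat -> nat) (X Q : nat -> R) (i : nat) : R :=
  match i with
  | O => 0
  | S i' => let j := Nat.div2 i' in
      if Nat.even i' then (if Nat.leb (a (2*j+2)%nat) (a (2*j+1)%nat) then X j else Q j)
      else (if Nat.leb (a (2*j+2)%nat) (a (2*j+1)%nat) then Q j else X j)
  end.

Lemma interleave_odd a X Q j :
  interleave a X Q (2*j+1)%nat = if Nat.leb (a (2*j+2)%nat) (a (2*j+1)%nat) then X j else Q j.
Proof.
  replace (2*j+1)%nat with (S (2*j)) at 1 by lia. unfold interleave.
  rewrite Nat.even_even, Nat.div2_double. reflexivity.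
Qed.

Lemma interleave_even a X Q j :
  interleave a X Q (2*j+2)%nat = if Nat.leb (a (2*j+2)%nat) (a (2*j+1)%nat) then Q j else X j.
Proof.
  replace (2*j+2)%nat with (S (2*j+1)) at 1 by lia. unfold interleave.
  assert (E : Nat.div2 (2*j+1) = j)
    by (replace (2*j+1)%nat with (S (2*j)) by lia; apply Nat.div2_succ_double).
  rewrite Nat.even_odd, E. reflexivity.
Qed.

Lemma interleave_cantor a X Q : (forall j, cantor_set (X j) /\ cantor_set (Q j)) ->
  forall i, (1 <= i)%nat -> cantor_set (interleave a X Q i).
Proof.
  intros H [|i] Hi; [lia|]. simpl. destruct (Nat.even i), (Nat.leb _ _); apply H.
Qed.

Lemma interleave_sum a X Q m s :
  rsum m (fun j => X j ^ big_exp a m s j * Q j ^ small_exp a m s j) =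
  rsum m (fun j => interleave a X Q (2 * j + 1) ^ a (2 * j + 1)%nat
                   * interleave a X Q (2 * j + 2) ^ a (2 * j + 2)%nat).
Proof.
  apply rsum_ext. intros j Hj. rewrite interleave_odd, interleave_even. unfold big_exp, small_exp.
  destruct (Nat.ltb_spec j m); [|lia].
  destruct (Nat.leb_spec (a (2*j+2)%nat) (a (2*j+1)%nat)).
  - rewrite Nat.max_l, Nat.min_r by lia. reflexivity.
  - rewrite Nat.max_r, Nat.min_l by lia. ring.
Qed.

Lemma cantor_pair_sum_bounds (m : nat) (a : nat -> nat) (x : nat -> R) :
  (forall i, (1 <= i <= 2 * m)%nat -> cantor_set (x i)) ->
  0 <= rsum m (fun j => x (2 * j + 1)%nat ^ a (2 * j + 1)%nat * x (2 * j + 2)%nat ^ a (2 * j + 2)%nat)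
    <= INR m.
Proof.
  intros Hx.
  assert (T : forall j, (j < m)%nat ->
    0 <= x (2 * j + 1)%nat ^ a (2 * j + 1)%nat * x (2 * j + 2)%nat ^ a (2 * j + 2)%nat <= 1).
  { intros j Hj. destruct (cantor_set_bounds _ (Hx (2*j+1)%nat ltac:(lia))).
    destruct (cantor_set_bounds _ (Hx (2*j+2)%nat ltac:(lia))).
    assert (0 <= x (2 * j + 1)%nat ^ a (2 * j + 1)%nat <= 1)
      by (split; [apply pow_le| apply pow_le_one]; lra).
    assert (0 <= x (2 * j + 2)%nat ^ a (2 * j + 2)%nat <= 1)
      by (split; [apply pow_le| apply pow_le_one]; lra).
    split; nra. }
  split; [apply rsum_nonneg; intros; apply T; auto|].
  rewrite <- (Rmult_1_r (INR m)), <- rsum_const. apply rsum_le. intros; apply T; auto.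
Qed.

Theorem theorem1p1 (s k : nat) (a : nat -> nat)
  (hs : (2 < s)%nat) (hk : (0 < k)%nat) (hkeven : Nat.Even k)
  (hapos : forall i : nat, (1 <= i <= k)%nat -> (0 < a i)%nat)
  (hsum : forall i : nat, (1 <= i <= k / 2)%nat -> (a (2 * i - 1) + a (2 * i))%nat = s)
  (hbound : INR k >= Rpower 2 (INR s / 2 + 1) *
      IZR (Rceil (Rpower ((INR s + 3) / (INR s - 2)) (INR s / 2 - 1)
                  * ((5 * INR s + 6) / (5 * INR s - 6)) + 1))) :
  forall y : R,
    (0 <= y <= INR k / 2) <->
    (exists x : nat -> R,
       (forall i : nat, (1 <= i <= k)%nat -> cantor_set (x i)) /\
       y = sum_f_R0 (fun j => x (2 * j + 1)%nat ^ a (2 * j + 1)%nat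
                              * x (2 * j + 2)%nat ^ a (2 * j + 2)%nat)
                    (k / 2 - 1)%nat).
Proof.
  destruct hkeven as [m ->].
  replace (2 * m / 2)%nat with m in * by (rewrite Nat.mul_comm, Nat.div_mul; lia).
  assert (Hcov := cover_of_hbound _ _ s m hs (exponent_pairs_of_sums s m a ltac:(lia) hapos hsum) hbound).
  intros y. replace (INR (2 * m) / 2) with (INR m) by (rewrite mult_INR; simpl; field).
  assert (Hrange : forall f, sum_f_R0 f (m - 1) = rsum m f)
    by (intros f; rewrite sum_f_R0_rsum; f_equal; lia).
  split.
  - intros Hy. destruct (Hcov y Hy) as [X [Q [HXQ Hsum]]].
    exists (interleave a X Q). split.
    + intros i Hi. apply interleave_cantor; auto. lia.
    + rewrite Hrange, <- Hsum. apply interleave_sum.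
  - intros [x [Hx ->]]. rewrite Hrange. apply cantor_pair_sum_bounds, Hx.
Qed.
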